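(* Consider DGD$^t$ started from $\mathbf{x}_0=0$. Suppose each $f_i$ is convex with $L_i$-Lipschitz gradient and attains its minimum, and $h=\sum_i f_i$ is $\mu_h$-strongly convex with unique minimizer $x^\star$. Let $L=\max_i L_i$, $\mu_{\bar f}=\mu_h/n$, $L_{\bar f}=\frac1n\sum_i L_i$, $c_2=\frac{2\mu_{\bar f}L_{\bar f}}{\mu_{\bar f}+L_{\bar f}}$, $c_4=\frac{2}{\mu_{\bar f}+L_{\bar f}}$, $D=\sqrt{2L\sum_{i=1}^n(f_i(0)-f_i^\star)}$, and let $$0<\alpha\le\min\Big\{\frac{1+\lambda_n(\mathbf{W}^t)}{L},\,c_4\Big\}.$$ Then for every $\delta>0$ and all $k=0,1,2,\ldots$, $$\|\bar x_{k+1}-x^\star\|^2\le c_1^2\|\bar x_k-x^\star\|^2+\frac{c_3^2}{(1-\beta^t)^2},$$ where $c_1^2=1-\alpha c_2+\alpha\delta-\alpha^2\delta c_2$ and $c_3^2=\alpha^3(\alpha+\delta^{-1})L^2D^2$. In particular, if $\alpha c_2<1$ and $\delta=\frac{c_2}{2(1-\alpha c_2)}$, then $c_1=\sqrt{1-\alpha c_2/2}\in(0,1)$ and for all $k\ge0$ $$\|\bar x_k-x^\star\|\le c_1^k\|\bar x_0-x^\star\|+\frac{c_3}{\sqrt{1-c_1^2}\,(1-\beta^t)},$$ the last term being $\mathcal{O}\big(\alpha/(1-\beta^t)\big)$.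
   Context: Setting: $n$ agents with convex $f_i:\mathbb{R}^p\to\mathbb{R}$, $f_i^\star=\min f_i$. $\mathbf{W}$ is a symmetric doubly-stochastic $n\times n$ matrix of a connected network ($w_{ii}>0$, $w_{ij}>0$ iff $i,j$ neighbours), with simple eigenvalue $1$ and other eigenvalues in $(-1,1)$; $\beta\in(0,1)$ is the second largest eigenvalue magnitude of $\mathbf{W}$; $\lambda_n(\mathbf{W}^t)$ is the smallest eigenvalue of $\mathbf{W}^t$. $\mathbf{Z}=\mathbf{W}\otimes I_p$. DGD$^t$ (fixed integer $t\ge1$): $\mathbf{x}_{k+1}=\mathbf{Z}^t\mathbf{x}_k-\alpha\nabla\mathbf{f}(\mathbf{x}_k)$ with $\mathbf{x}=(x_1;\ldots;x_n)$, $\nabla\mathbf{f}(\mathbf{x})=(\nabla f_1(x_1);\ldots;\nabla f_n(x_n))$. $\bar x_k=\frac1n\sum_i x_{i,k}$. *)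

From mathcomp Require Import all_boot.
From Stdlib Require Import Reals.
Set Implicit Arguments. Unset Strict Implicit. Unset Printing Implicit Defensive.
Open Scope R_scope.

Definition vec (p : nat) := 'I_p -> R.
Definition vzero {p} : vec p := fun _ => 0.
Definition vadd {p} (u v : vec p) : vec p := fun c => u c + v c.
Definition vsub {p} (u v : vec p) : vec p := fun c => u c - v c.
Definition vscale {p} (a : R) (u : vec p) : vec p := fun c => a * u c.
Definition dot {p} (u v : vec p) : R := \big[Rplus/0]_(c < p) (u c * v c).
Definition norm2 {p} (u : vec p) : R := dot u u.
Definition norm {p} (u : vec p) : R := sqrt (norm2 u).

Definition is_gradient {p} (f : vec p -> R) (g : vec p -> vec p) : Prop :=
  forall x eps, 0 < eps -> exists del, 0 < del /\
    forall h : vec p, norm h < del ->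
      Rabs (f (vadd x h) - f x - dot (g x) h) <= eps * norm h.

Definition convex_fun {p} (f : vec p -> R) : Prop :=
  forall x y th, 0 <= th <= 1 ->
    f (vadd (vscale th x) (vscale (1 - th) y)) <= th * f x + (1 - th) * f y.

(* mu-strong convexity (mu > 0 required separately) *)
Definition strongly_convex {p} (mu : R) (f : vec p -> R) : Prop :=
  forall x y th, 0 <= th <= 1 ->
    f (vadd (vscale th x) (vscale (1 - th) y))
      <= th * f x + (1 - th) * f y - mu / 2 * th * (1 - th) * norm2 (vsub x y).

Definition lipschitz {p} (Lc : R) (g : vec p -> vec p) : Prop :=
  forall x y, norm (vsub (g x) (g y)) <= Lc * norm (vsub x y).

Definition is_min_value {p} (f : vec p -> R) (fs : R) : Prop :=
  (exists x, f x = fs) /\ (forall y, fs <= f y).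

Definition is_minimizer {p} (f : vec p -> R) (x : vec p) : Prop :=
  forall y, f x <= f y.

Definition mat (n : nat) := 'I_n -> 'I_n -> R.
Definition mmul {n} (A B : mat n) : mat n :=
  fun i j => \big[Rplus/0]_(k < n) (A i k * B k j).
Definition mid {n} : mat n := fun i j => if i == j then 1 else 0.
Fixpoint mpow {n} (A : mat n) (t : nat) : mat n :=
  match t with O => mid | S t' => mmul A (mpow A t') end.
Definition mapply {n} (A : mat n) (v : 'I_n -> R) : 'I_n -> R :=
  fun i => \big[Rplus/0]_(j < n) (A i j * v j).

Definition is_eigenvalue {n} (A : mat n) (lam : R) : Prop :=
  exists v : 'I_n -> R, (exists i, v i <> 0) /\ forall i, mapply A v i = lam * v i.

Definition is_min_eigenvalue {n} (A : mat n) (lam : R) : Prop :=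
  is_eigenvalue A lam /\ forall mu, is_eigenvalue A mu -> lam <= mu.

Inductive w_connected {n} (W : mat n) : 'I_n -> 'I_n -> Prop :=
| wc_refl i : w_connected W i i
| wc_step i j k : i != j -> 0 < W i j -> w_connected W j k -> w_connected W i k.

Definition mixing_matrix {n} (W : mat n) : Prop :=
  (forall i j, W i j = W j i) /\
  (forall i j, 0 <= W i j) /\
  (forall i, \big[Rplus/0]_(j < n) W i j = 1) /\
  (forall j, \big[Rplus/0]_(i < n) W i j = 1) /\
  (forall i, 0 < W i i) /\
  (forall i j, w_connected W i j) /\
  (* 1 is a simple eigenvalue (W symmetric: eigenspace of 1 = span of ones) *)
  (forall v : 'I_n -> R, (forall i, mapply W v i = v i) ->
      exists c, forall i, v i = c) /\
  (forall lam, is_eigenvalue W lam -> lam <> 1 -> -1 < lam < 1).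

(* beta = second largest eigenvalue magnitude of W
        = max { |lam| : lam eigenvalue of W, lam <> 1 } (1 being simple) *)
Definition is_second_eig_mag {n} (W : mat n) (beta : R) : Prop :=
  (exists lam, is_eigenvalue W lam /\ lam <> 1 /\ Rabs lam = beta) /\
  (forall lam, is_eigenvalue W lam -> lam <> 1 -> Rabs lam <= beta).

Fixpoint dgd {n p} (W : mat n) (t : nat) (alpha : R)
    (g : 'I_n -> vec p -> vec p) (k : nat) : 'I_n -> vec p :=
  match k with
  | O => fun _ => vzero
  | S k' => let xk := dgd W t alpha g k' in
      fun i c => \big[Rplus/0]_(j < n) (mpow W t i j * xk j c)
                 - alpha * g i (xk i) c
  end.

Definition xbar {n p} (x : 'I_n -> vec p) : vec p :=
  fun c => (\big[Rplus/0]_(i < n) x i c) / INR n.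

Definition sumR {n} (F : 'I_n -> R) : R := \big[Rplus/0]_(i < n) F i.
Definition maxR {n} (F : 'I_n -> R) : R := \big[Rmax/0]_(i < n) F i.

From mathcomp Require Import all_boot all_algebra.
From Stdlib Require Import Reals Lra Psatz FunctionalExtensionality Classical.
From mathcomp Require Import Rstruct.
Open Scope R_scope.
Set Implicit Arguments. Unset Strict Implicit.

(* The mean [xbar_k] of the local iterates takes an inexact gradient step on the averaged
   objective [h / n], which is [mu_h / n]-strongly convex and [L_f]-smooth.  The exact step
   contracts the distance to [x*] by [1 - alpha c2] (Nesterov's cocoercivity inequality); the
   error is at most [alpha L] times the consensus deviation of the local iterates, and Young's
   inequality separates the two.  The deviation obeys [dev_(k+1) <= beta^t dev_k + alpha D]
   because [W^t] contracts mean-zero vectors by [beta^t], provided the local gradients stay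
   below [D] in norm.  They do: DGD^t is gradient descent with step [alpha] on
   [V(x) = sum_i f_i(x_i) + x'(I - W^t) x / (2 alpha)], and [alpha L <= 1 + lambda_n(W^t)]
   makes every step decrease [V], which bounds [sum_i f_i(x_(k,i)) - f_i*] and hence the
   gradients.  Unrolling the one-step recursion gives the rate. *)

(** * Finite sums and vectors *)

Lemma Rsum_le n (F G : 'I_n -> R) : (forall i, F i <= G i) ->
  \big[Rplus/0]_(i < n) F i <= \big[Rplus/0]_(i < n) G i.
Proof. by move=> H; apply: (big_ind2 (fun a b => a <= b)) => //; [lra | move=> a b c d; lra]. Qed.

Lemma Rsum_ge0 n (F : 'I_n -> R) : (forall i, 0 <= F i) -> 0 <= \big[Rplus/0]_(i < n) F i.
Proof. by move=> H; apply: (big_ind (fun a => 0 <= a)) => //; [lra | move=> a b; lra]. Qed.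

Lemma Rsum_ge_term n (F : 'I_n -> R) i : (forall j, 0 <= F j) ->
  F i <= \big[Rplus/0]_(j < n) F j.
Proof.
move=> H; rewrite (bigD1 i) //= -{1}(Rplus_0_r (F i)); apply: Rplus_le_compat_l.
by apply: (big_ind (fun a => 0 <= a)) => //; [lra | move=> a b; lra].
Qed.

Lemma Rsum_ge0_eq0 n (F : 'I_n -> R) : (forall i, 0 <= F i) ->
  \big[Rplus/0]_(i < n) F i = 0 -> forall i, F i = 0.
Proof. by move=> H S i; apply: Rle_antisym; [rewrite -S; exact: Rsum_ge_term | exact: H]. Qed.

Lemma Rsum_const n c : \big[Rplus/0]_(i < n) c = INR n * c.
Proof.
elim: n => [|n IH]; first by rewrite big_ord0 /=; ring.
by rewrite big_ord_recr IH S_INR /=; ring.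
Qed.

Lemma Rsum_lin2 n a b (F G : 'I_n -> R) :
  \big[Rplus/0]_(i < n) (a * F i + b * G i)
  = a * \big[Rplus/0]_(i < n) F i + b * \big[Rplus/0]_(i < n) G i.
Proof. by rewrite big_split /= -!big_distrr. Qed.

Lemma Rsum_lin3 n a b c (F G H : 'I_n -> R) :
  \big[Rplus/0]_(i < n) (a * F i + b * G i + c * H i) =
  a * \big[Rplus/0]_(i < n) F i + b * \big[Rplus/0]_(i < n) G i
  + c * \big[Rplus/0]_(i < n) H i.
Proof. by rewrite !big_split /= -!big_distrr. Qed.

Lemma Rsum_sub n (F G : 'I_n -> R) :
  \big[Rplus/0]_(i < n) (F i - G i) = \big[Rplus/0]_(i < n) F i - \big[Rplus/0]_(i < n) G i.
Proof.
rewrite (eq_bigr (fun i => 1 * F i + (-1) * G i)); last by move=> i _; ring.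
by rewrite Rsum_lin2; ring.
Qed.

Lemma Rsum_delta n (i : 'I_n) a (u : 'I_n -> R) :
  \big[Rplus/0]_(j < n) ((if i == j then a else 0) * u j) = a * u i.
Proof.
rewrite (bigD1 i) //= eqxx big1; first ring.
by move=> j /negbTE; rewrite eq_sym => ->; ring.
Qed.

Lemma quadratic_nonneg_discr a b c : 0 <= c ->
  (forall s, 0 <= a + 2 * b * s + c * s ^ 2) -> b ^ 2 <= a * c.
Proof.
move=> Hc H; case: (Rle_lt_or_eq_dec 0 c Hc) => [Hc'|Hc0]; last subst c.
- have := H (- b / c).
  have -> : a + 2 * b * (- b / c) + c * (- b / c) ^ 2 = (a * c - b ^ 2) / c by field; lra.
  move=> H1; have : 0 <= (a * c - b ^ 2) / c * c by apply: Rmult_le_pos; lra.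
  have -> : (a * c - b ^ 2) / c * c = a * c - b ^ 2 by field; lra.
  lra.
- case: (Req_dec b 0) => [->|Hb]; first by have := H 0; nra.
  have := H (- (a + 1) / (2 * b)).
  have -> : a + 2 * b * (- (a + 1) / (2 * b)) + 0 * (- (a + 1) / (2 * b)) ^ 2 = -1 by field.
  lra.
Qed.

Lemma vec_ext p (u v : vec p) : (forall c, u c = v c) -> u = v.
Proof. by move=> H; apply: functional_extensionality. Qed.

Lemma norm2_ge0 p (u : vec p) : 0 <= norm2 u.
Proof. by apply: Rsum_ge0 => c; nra. Qed.

Lemma norm2_eq0 p (u : vec p) : norm2 u = 0 -> u = vzero.
Proof.
move=> H; apply: vec_ext => c.
by have := Rsum_ge0_eq0 (F := fun c => u c * u c) (fun c => ltac:(nra)) H c; rewrite /vzero; nra.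
Qed.

Lemma dotC p (u v : vec p) : dot u v = dot v u.
Proof. by apply: eq_bigr => c _; ring. Qed.

Lemma dot0l p (u : vec p) : dot vzero u = 0.
Proof. by apply: big1 => c _; rewrite /vzero; ring. Qed.

Lemma dot_linl p (u v w : vec p) s :
  dot (fun j => u j + s * v j) w = dot u w + s * dot v w.
Proof.
rewrite /dot (eq_bigr (fun c => 1 * (u c * w c) + s * (v c * w c))); last by move=> c _; ring.
by rewrite Rsum_lin2; ring.
Qed.

Lemma dot_linr p (u v w : vec p) s :
  dot w (fun j => u j + s * v j) = dot w u + s * dot w v.
Proof. by rewrite dotC dot_linl !(dotC w). Qed.

Lemma dot_scalel p a (u v : vec p) : dot (vscale a u) v = a * dot u v.
Proof. by rewrite /dot /vscale big_distrr /=; apply: eq_bigr => c _; ring. Qed.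

Lemma dot_scaler p a (u v : vec p) : dot u (vscale a v) = a * dot u v.
Proof. by rewrite dotC dot_scalel dotC. Qed.

Lemma dot_addl p (u v w : vec p) : dot (vadd u v) w = dot u w + dot v w.
Proof. by rewrite -[dot v w]Rmult_1_l -dot_linl; apply: eq_bigr => c _; rewrite /vadd; ring. Qed.

Lemma dot_addr p (u v w : vec p) : dot w (vadd u v) = dot w u + dot w v.
Proof. by rewrite dotC dot_addl !(dotC w). Qed.

Lemma dot_subl p (u v w : vec p) : dot (vsub u v) w = dot u w - dot v w.
Proof.
have -> : dot u w - dot v w = dot u w + (-1) * dot v w by ring.
by rewrite -dot_linl; apply: eq_bigr => c _; rewrite /vsub; ring.
Qed.

Lemma dot_subr p (u v w : vec p) : dot w (vsub u v) = dot w u - dot w v.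
Proof. by rewrite dotC dot_subl !(dotC w). Qed.

Ltac dot_expand :=
  rewrite ?/norm2; repeat progress rewrite ?dot_subr ?dot_subl ?dot_addr ?dot_addl
                                          ?dot_scaler ?dot_scalel.

Lemma norm2_lin p (u v : vec p) s :
  norm2 (fun c => u c + s * v c) = norm2 u + 2 * dot u v * s + norm2 v * s ^ 2.
Proof. by rewrite /norm2 dot_linl !dot_linr (dotC v u); ring. Qed.

Lemma norm2_scale p a (u : vec p) : norm2 (vscale a u) = a ^ 2 * norm2 u.
Proof. by rewrite /norm2 dot_scalel dot_scaler; ring. Qed.

Lemma cauchy_schwarz2 p (u v : vec p) : dot u v ^ 2 <= norm2 u * norm2 v.
Proof.
apply: quadratic_nonneg_discr; first exact: norm2_ge0.
by move=> s; rewrite -norm2_lin; exact: norm2_ge0.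
Qed.

Lemma norm_ge0 p (u : vec p) : 0 <= norm u.
Proof. exact: sqrt_pos. Qed.

Lemma norm_sq p (u : vec p) : norm u ^ 2 = norm2 u.
Proof. by rewrite /norm pow2_sqrt //; exact: norm2_ge0. Qed.

Lemma cauchy_schwarz p (u v : vec p) : dot u v <= norm u * norm v.
Proof.
have H := cauchy_schwarz2 u v; have H1 := norm_ge0 u; have H2 := norm_ge0 v.
rewrite -!norm_sq -Rpow_mult_distr in H.
case: (Rle_or_lt (dot u v) 0) => Hd; first nra.
have H4 : 0 <= norm u * norm v by nra.
nra.
Qed.

Lemma norm_scale p a (u : vec p) : norm (vscale a u) = Rabs a * norm u.
Proof.
rewrite /norm norm2_scale sqrt_mult; [|nra|exact: norm2_ge0].
by rewrite -sqrt_Rsqr_abs /Rsqr /= Rmult_1_r.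
Qed.

Lemma young_norm2 p (u v : vec p) s : 0 < s ->
  norm2 (fun c => u c + 1 * v c) <= (1 + s) * norm2 u + (1 + / s) * norm2 v.
Proof.
move=> Hs; rewrite norm2_lin.
have H := norm2_ge0 (fun c => vscale s u c + (-1) * v c).
rewrite norm2_lin norm2_scale dot_scalel in H.
have : 2 * dot u v <= s * norm2 u + / s * norm2 v.
  apply: (Rmult_le_reg_r s) => //.
  have -> : (s * norm2 u + / s * norm2 v) * s = s ^ 2 * norm2 u + norm2 v by field; lra.
  nra.
lra.
Qed.

(** * Smoothness and convexity *)

Lemma line_shift p (x d : vec p) s h :
  vadd x (vscale (s + h) d) = vadd (vadd x (vscale s d)) (vscale h d).
Proof. by apply: vec_ext => c; rewrite /vadd /vscale; ring. Qed.

Lemma line0 p (x d : vec p) : vadd x (vscale 0 d) = x.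
Proof. by apply: vec_ext => c; rewrite /vadd /vscale; ring. Qed.

Lemma line1 p (x y : vec p) : vadd x (vscale 1 (vsub y x)) = y.
Proof. by apply: vec_ext => c; rewrite /vadd /vscale /vsub; ring. Qed.

Lemma gradient_line_deriv p (f : vec p -> R) g x d s : is_gradient f g ->
  derivable_pt_lim (fun s => f (vadd x (vscale s d))) s
    (dot (g (vadd x (vscale s d))) d).
Proof.
move=> Hg eps Heps.
set z := vadd x (vscale s d).
have HN := norm_ge0 d.
have He' : 0 < eps / (2 * (norm d + 1)) by apply: Rdiv_lt_0_compat; lra.
have [del [Hdel H]] := Hg z _ He'.
have Hdp : 0 < del / (norm d + 1) by apply: Rdiv_lt_0_compat; lra.
exists (mkposreal _ Hdp) => h Hh0 Hh /=.
rewrite line_shift -/z.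
have Hah : 0 < Rabs h by apply: Rabs_pos_lt.
have Hnh : norm (vscale h d) < del.
  rewrite norm_scale.
  have : Rabs h * (norm d + 1) < del.
    have E : del / (norm d + 1) * (norm d + 1) = del by field; lra.
    by rewrite -[X in _ < X]E; apply: Rmult_lt_compat_r; [lra | exact: Hh].
  nra.
have H1 := H _ Hnh; rewrite norm_scale dot_scaler in H1.
have -> : (f (vadd z (vscale h d)) - f z) / h - dot (g z) d =
          (f (vadd z (vscale h d)) - f z - h * dot (g z) d) / h by field.
rewrite /Rdiv Rabs_mult Rabs_inv -/(Rdiv _ _).
apply: (Rle_lt_trans _ (eps / (2 * (norm d + 1)) * norm d)).
  apply: (Rmult_le_reg_r (Rabs h)) => //.
  rewrite /Rdiv Rmult_assoc Rinv_l; last lra.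
  rewrite Rmult_1_r; nra.
apply: (Rmult_lt_reg_r (2 * (norm d + 1))); first lra.
have -> : eps / (2 * (norm d + 1)) * norm d * (2 * (norm d + 1)) = eps * norm d by field; lra.
nra.
Qed.

(* Divide the chord inequality by [th] and let [th] tend to [0]. *)
Lemma deriv0_le_chord (phi : R -> R) D k : derivable_pt_lim phi 0 D ->
  (forall th, 0 < th <= 1 -> phi th <= (1 - th) * phi 0 + th * phi 1 - k * th * (1 - th)) ->
  D <= phi 1 - phi 0 - k.
Proof.
move=> Hd H; apply: Rnot_lt_le => Hlt.
set gap := D - (phi 1 - phi 0 - k).
have Hgap : 0 < gap by rewrite /gap; lra.
have [del Hdel] := Hd (gap / 2) ltac:(lra).
have Hdp := cond_pos del.
have Hk : 0 < gap / (4 * (Rabs k + 1)).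
  by apply: Rdiv_lt_0_compat; [lra | have := Rabs_pos k; lra].
set th := Rmin (del / 2) (Rmin 1 (gap / (4 * (Rabs k + 1)))).
have Hth0 : 0 < th by apply: Rmin_pos; [lra | apply: Rmin_pos; lra].
have Hth1 : th <= 1 by apply: Rle_trans (Rmin_r _ _) (Rmin_l _ _).
have Hthd : th < del by apply: Rle_lt_trans (Rmin_l _ _) _; lra.
have Hthk : th <= gap / (4 * (Rabs k + 1)) by apply: Rle_trans (Rmin_r _ _) (Rmin_r _ _).
have H1 := Hdel th ltac:(lra) ltac:(rewrite Rabs_pos_eq; lra).
rewrite Rplus_0_l in H1.
have H2 := H th (conj Hth0 Hth1).
have Hq : (phi th - phi 0) / th <= phi 1 - phi 0 - k + k * th.
  apply: (Rmult_le_reg_r th) => //.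
  have -> : (phi th - phi 0) / th * th = phi th - phi 0 by field; lra.
  nra.
have Hkth : k * th <= gap / 4.
  have Hab := Rabs_pos k.
  have : Rabs k * th <= Rabs k * (gap / (4 * (Rabs k + 1))) by apply: Rmult_le_compat_l.
  have : Rabs k * (gap / (4 * (Rabs k + 1))) <= gap / 4.
    apply: (Rmult_le_reg_r (4 * (Rabs k + 1))); first lra.
    have -> : Rabs k * (gap / (4 * (Rabs k + 1))) * (4 * (Rabs k + 1)) = Rabs k * gap
      by field; lra.
    have -> : gap / 4 * (4 * (Rabs k + 1)) = gap * (Rabs k + 1) by field.
    nra.
  have := Rle_abs k; nra.
have := Rabs_def2 _ _ H1; rewrite /gap in Hkth Hgap *; lra.
Qed.

Lemma strongly_convex_first_order p (h : vec p -> R) mu D x y :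
  strongly_convex mu h ->
  derivable_pt_lim (fun s => h (vadd x (vscale s (vsub y x)))) 0 D ->
  h x + D + mu / 2 * norm2 (vsub y x) <= h y.
Proof.
move=> Hsc Hd.
have := deriv0_le_chord (k := mu / 2 * norm2 (vsub y x)) Hd.
rewrite line0 line1 => H.
suff : D <= h y - h x - mu / 2 * norm2 (vsub y x) by lra.
apply: H => th Hth.
have -> : vadd x (vscale th (vsub y x)) = vadd (vscale th y) (vscale (1 - th) x).
  by apply: vec_ext => c; rewrite /vadd /vscale /vsub; ring.
by have := Hsc y x th ltac:(lra); lra.
Qed.

Lemma lipschitz_line_deriv_growth p (g : vec p -> vec p) Lc x d s : lipschitz Lc g -> 0 <= s ->
  dot (g (vadd x (vscale s d))) d - dot (g x) d <= Lc * s * norm2 d.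
Proof.
move=> HL Hs; rewrite -dot_subl.
have H1 := cauchy_schwarz (vsub (g (vadd x (vscale s d))) (g x)) d.
have H2 := HL (vadd x (vscale s d)) x.
have E : vsub (vadd x (vscale s d)) x = vscale s d.
  by apply: vec_ext => i; rewrite /vsub /vadd /vscale; ring.
rewrite E norm_scale Rabs_pos_eq // in H2; rewrite -norm_sq.
have := norm_ge0 d; have := norm_ge0 (vsub (g (vadd x (vscale s d))) (g x)); nra.
Qed.

Lemma smooth_upper_bound p (f : vec p -> R) g Lc x y :
  is_gradient f g -> lipschitz Lc g ->
  f y <= f x + dot (g x) (vsub y x) + Lc / 2 * norm2 (vsub y x).
Proof.
move=> Hg HL.
set d := vsub y x; set N := norm2 d.
pose psi s := f (vadd x (vscale s d)) - s * dot (g x) d - Lc / 2 * N * Rsqr s.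
pose psi' s := dot (g (vadd x (vscale s d))) d - dot (g x) d - Lc / 2 * N * (2 * s).
have Hder : forall s, derivable_pt_lim psi s (psi' s).
  move=> s; apply: derivable_pt_lim_minus; last first.
    exact: derivable_pt_lim_scal _ _ _ _ (derivable_pt_lim_Rsqr s).
  apply: derivable_pt_lim_minus; first exact: gradient_line_deriv.
  have := derivable_pt_lim_scal id (dot (g x) d) s 1 (derivable_pt_lim_id s).
  rewrite Rmult_1_r; apply: derivable_pt_lim_ext => z.
  by rewrite /mult_real_fct /id; ring.
have [c [Hc Hc01]] := MVT_cor2 psi psi' 0 1 Rlt_0_1 (fun c _ => Hder c).
have Hp : psi' c <= 0.
  have := lipschitz_line_deriv_growth x d HL (Rlt_le _ _ (proj1 Hc01)).
  by rewrite -/N /psi'; lra.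
move: Hc; rewrite /psi line1 line0 /Rsqr; nra.
Qed.

Lemma norm2_subC p (u v : vec p) : norm2 (vsub u v) = norm2 (vsub v u).
Proof. by apply: eq_bigr => c _; rewrite /vsub; ring. Qed.

Lemma vsub_lin p (u v w : vec p) s :
  vsub (fun j => u j + s * w j) v = (fun j => vsub u v j + s * w j).
Proof. by apply: vec_ext => j; rewrite /vsub; ring. Qed.

Lemma cocoercive_of_convex_smooth p (psi : vec p -> R) (Psi : vec p -> vec p) c : 0 < c ->
  (forall x y, psi x + dot (Psi x) (vsub y x) <= psi y) ->
  (forall x y, psi y <= psi x + dot (Psi x) (vsub y x) + c / 2 * norm2 (vsub y x)) ->
  forall x y, norm2 (vsub (Psi x) (Psi y)) <= c * dot (vsub (Psi x) (Psi y)) (vsub x y).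
Proof.
move=> Hc Hfo Hsm.
have Hk : c * / c = 1 by field; lra.
(* Compare [psi] at [x] and at [y] through the point [z = y - (Psi y - Psi x) / c]. *)
have Hgap : forall x y,
    psi x + dot (Psi x) (vsub y x) + / c / 2 * norm2 (vsub (Psi y) (Psi x)) <= psi y.
  move=> x y; set w := vsub (Psi y) (Psi x).
  pose z := fun j => y j + (- / c) * w j.
  have H1 := Hfo x z; have H2 := Hsm y z.
  have Ezx : vsub z x = (fun j => vsub y x j + (- / c) * w j) by rewrite /z vsub_lin.
  rewrite Ezx dot_linr in H1.
  have Ezy : vsub z y = vscale (- / c) w by apply: vec_ext => j; rewrite /z /vsub /vscale; ring.
  rewrite Ezy dot_scaler norm2_scale in H2.
  have Hw : dot (Psi y) w - dot (Psi x) w = norm2 w by rewrite /norm2 /w dot_subl.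
  have E : c / 2 * ((- / c) ^ 2 * norm2 w) = / c / 2 * norm2 w by field; lra.
  have E' : / c * dot (Psi y) w - / c * dot (Psi x) w = / c * norm2 w by rewrite -Hw; ring.
  rewrite E in H2; lra.
move=> x y.
have H1 := Hgap x y; have H2 := Hgap y x.
rewrite (norm2_subC (Psi y)) in H1.
have E : dot (vsub (Psi x) (Psi y)) (vsub x y)
         = - dot (Psi x) (vsub y x) - dot (Psi y) (vsub x y).
  by dot_expand; lra.
have : / c * norm2 (vsub (Psi x) (Psi y)) <= dot (vsub (Psi x) (Psi y)) (vsub x y) by lra.
move/(Rmult_le_compat_l c); rewrite -Rmult_assoc Hk Rmult_1_l; apply; lra.
Qed.

Lemma le_mul_of_forall_gt l a b : 0 <= l ->
  (forall c, 0 < c -> l <= c -> b <= c * a) -> b <= l * a.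
Proof.
move=> Hl H; case: (Rle_lt_or_eq_dec 0 l Hl) => [Hl'|Hl0]; first by apply: H; lra.
subst l; rewrite Rmult_0_l; apply: Rnot_lt_le => Hb.
case: (Rle_or_lt a 0) => Ha; first by have := H 1 Rlt_0_1 ltac:(lra); nra.
have := H (b / (2 * a)) ltac:(apply: Rdiv_lt_0_compat; lra)
                        ltac:(apply: Rlt_le; apply: Rdiv_lt_0_compat; lra).
have -> : b / (2 * a) * a = b / 2 by field; lra.
lra.
Qed.

Lemma vsub_eq0 p (x y : vec p) : norm2 (vsub x y) = 0 -> x = y.
Proof.
move/norm2_eq0 => H; apply: vec_ext => c.
by have := f_equal (fun u => u c) H; rewrite /vsub /vzero; lra.
Qed.

Lemma gradient_step_algebra m Lq a X A G : 0 < m -> m <= Lq -> 0 < a -> a <= 2 / (m + Lq) ->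
  0 <= X -> 0 <= G -> G + m * Lq * X <= (m + Lq) * A ->
  X - 2 * a * A + a ^ 2 * G <= (1 - a * (2 * m * Lq / (m + Lq))) * X.
Proof.
move=> Hm HL Ha Has HX HG H.
set s := m + Lq in Has H *.
have Hs : 0 < s by rewrite /s; lra.
have H3 : 0 <= 2 - a * s.
  have : a * s <= 2 / s * s by apply: Rmult_le_compat_r; lra.
  have -> : 2 / s * s = 2 by field; lra.
  lra.
have H4 : a * (m * Lq * X) * (2 - a * s) <= a * (s * A) * (2 - a * s).
  by apply: Rmult_le_compat_r => //; apply: Rmult_le_compat_l; nra.
have H5 : a ^ 2 * G <= a ^ 2 * (s * A - m * Lq * X) by apply: Rmult_le_compat_l; nra.
apply: (Rmult_le_reg_r s) => //.
have -> : (1 - a * (2 * m * Lq / s)) * X * s = X * s - 2 * a * m * Lq * X by field; lra.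
nra.
Qed.

Section StronglyConvexSmooth.
Variables (p : nat) (phi : vec p -> R) (Gam : vec p -> vec p) (m Lq : R).
Hypothesis m_gt0 : 0 < m.
Hypothesis phi_sc :
  forall x y, phi x + dot (Gam x) (vsub y x) + m / 2 * norm2 (vsub y x) <= phi y.
Hypothesis phi_smooth :
  forall x y, phi y <= phi x + dot (Gam x) (vsub y x) + Lq / 2 * norm2 (vsub y x).

Lemma modulus_le_smoothness (x y : vec p) : 0 < norm2 (vsub x y) -> m <= Lq.
Proof. by move=> HX; have := phi_sc y x; have := phi_smooth y x; nra. Qed.

(* Nesterov's inequality: [phi - m/2 |.|^2] is convex and (Lq - m)-smooth, hence its
   gradient is cocoercive. *)
Lemma strongly_convex_smooth_coercive x y :
  norm2 (vsub (Gam x) (Gam y)) + m * Lq * norm2 (vsub x y)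
  <= (m + Lq) * dot (vsub (Gam x) (Gam y)) (vsub x y).
Proof.
case: (Rle_lt_or_eq_dec 0 _ (norm2_ge0 (vsub x y))) => HX; last first.
  have Exy := vsub_eq0 (esym HX); subst y; rewrite -HX.
  have -> : vsub (Gam x) (Gam x) = vzero by apply: vec_ext => c; rewrite /vsub /vzero; ring.
  by rewrite /norm2 !dot0l; lra.
have HmL := modulus_le_smoothness HX.
pose psi z := phi z - m / 2 * norm2 z.
pose Psi z := vsub (Gam z) (vscale m z).
have Hfo : forall u v, psi u + dot (Psi u) (vsub v u) <= psi v.
  move=> u v; have := phi_sc u v; rewrite /psi /Psi; dot_expand.
  by rewrite ?(dotC u v) ?(dotC v (Gam u)) ?(dotC u (Gam u)); nra.
have Hcoc : forall c, 0 < c -> Lq - m <= c ->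
    norm2 (vsub (Psi x) (Psi y)) <= c * dot (vsub (Psi x) (Psi y)) (vsub x y).
  move=> c Hc Hcl; apply: cocoercive_of_convex_smooth => // u v.
  have := phi_smooth u v; have := norm2_ge0 (vsub v u); rewrite /psi /Psi; dot_expand.
  by rewrite ?(dotC u v) ?(dotC v (Gam u)) ?(dotC u (Gam u)); nra.
have := le_mul_of_forall_gt (l := Lq - m) ltac:(lra) Hcoc.
rewrite /Psi; dot_expand.
rewrite ?(dotC x y) ?(dotC y (Gam x)) ?(dotC x (Gam x)) ?(dotC y (Gam y)) ?(dotC x (Gam y)).
rewrite ?(dotC (Gam y) (Gam x)); nra.
Qed.

Lemma gradient_step_contraction xs x a : Gam xs = vzero -> 0 < a -> a <= 2 / (m + Lq) ->
  norm2 (vsub (vsub x (vscale a (Gam x))) xs)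
  <= (1 - a * (2 * m * Lq / (m + Lq))) * norm2 (vsub x xs).
Proof.
move=> G0 Ha Has.
case: (Rle_lt_or_eq_dec 0 _ (norm2_ge0 (vsub x xs))) => HX; last first.
  have Exs := vsub_eq0 (esym HX); subst x; rewrite -HX Rmult_0_r G0.
  by apply: Req_le; apply: big1 => c _; rewrite /vsub /vscale /vzero; ring.
have Hco := strongly_convex_smooth_coercive x xs.
have Hz : vsub (Gam x) (Gam xs) = Gam x by apply: vec_ext => c; rewrite G0 /vsub /vzero; ring.
rewrite Hz in Hco.
have -> : norm2 (vsub (vsub x (vscale a (Gam x))) xs)
          = norm2 (vsub x xs) - 2 * a * dot (Gam x) (vsub x xs) + a ^ 2 * norm2 (Gam x).
  by dot_expand; rewrite ?(dotC x (Gam x)) ?(dotC xs (Gam x)); ring.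
apply: gradient_step_algebra => //; try exact: norm2_ge0.
exact: modulus_le_smoothness HX.
Qed.
End StronglyConvexSmooth.

Lemma smooth_gradient_step_decrease p (phi : vec p -> R) (Gam : vec p -> vec p) Lq x : 0 < Lq ->
  (forall x y, phi y <= phi x + dot (Gam x) (vsub y x) + Lq / 2 * norm2 (vsub y x)) ->
  phi (vsub x (vscale (/ Lq) (Gam x))) <= phi x - / (2 * Lq) * norm2 (Gam x).
Proof.
move=> HL Hsm; have := Hsm x (vsub x (vscale (/ Lq) (Gam x))).
have -> : vsub (vsub x (vscale (/ Lq) (Gam x))) x = vscale (- / Lq) (Gam x).
  by apply: vec_ext => c; rewrite /vsub /vscale; ring.
rewrite dot_scaler norm2_scale.
have -> : Lq / 2 * ((- / Lq) ^ 2 * norm2 (Gam x)) = / (2 * Lq) * norm2 (Gam x) by field; lra.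
have -> : / (2 * Lq) = / Lq / 2 by field; lra.
rewrite /norm2; lra.
Qed.

Lemma minimizer_gradient_zero p (phi : vec p -> R) (Gam : vec p -> vec p) Lq xs : 0 < Lq ->
  (forall x y, phi y <= phi x + dot (Gam x) (vsub y x) + Lq / 2 * norm2 (vsub y x)) ->
  (forall y, phi xs <= phi y) -> Gam xs = vzero.
Proof.
move=> HL Hsm Hmin; apply: norm2_eq0.
have := smooth_gradient_step_decrease xs HL Hsm; have := Hmin (vsub xs (vscale (/ Lq) (Gam xs))).
have := norm2_ge0 (Gam xs); have : 0 < / (2 * Lq) by apply: Rinv_0_lt_compat; lra.
nra.
Qed.

Lemma gradient_norm2_le_gap p (f : vec p -> R) g Lc fs y : 0 < Lc ->
  is_gradient f g -> lipschitz Lc g -> is_min_value f fs ->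
  norm2 (g y) <= 2 * Lc * (f y - fs).
Proof.
move=> HL Hg HLip [_ Hmin].
have := smooth_gradient_step_decrease y HL (fun x z => smooth_upper_bound x z Hg HLip).
have := Hmin (vsub y (vscale (/ Lc) (g y))).
have E : 2 * Lc * (/ (2 * Lc) * norm2 (g y)) = norm2 (g y) by field; lra.
nra.
Qed.

(** * Symmetric matrices *)

Definition mat_sym n (M : mat n) := forall i j, M i j = M j i.

Definition frob2 n (M : mat n) := \big[Rplus/0]_(i < n) norm2 (M i).

Lemma mapply_mmul n (A B : mat n) u i : mapply (mmul A B) u i = mapply A (mapply B u) i.
Proof.
rewrite /mapply /mmul.
transitivity (\big[Rplus/0]_(j < n) \big[Rplus/0]_(k < n) (A i k * B k j * u j)).
  by apply: eq_bigr => j _; rewrite big_distrl.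
rewrite exchange_big /=; apply: eq_bigr => k _; rewrite big_distrr /=.
by apply: eq_bigr => j _; ring.
Qed.

Lemma mapply_lin n (M : mat n) u v s i :
  mapply M (fun j => u j + s * v j) i = mapply M u i + s * mapply M v i.
Proof.
rewrite /mapply (eq_bigr (fun j => 1 * (M i j * u j) + s * (M i j * v j))).
  by rewrite Rsum_lin2; ring.
by move=> j _; ring.
Qed.

Lemma mapply_shift n (M : mat n) a u i :
  mapply (fun i j => M i j - (if i == j then a else 0)) u i = mapply M u i - a * u i.
Proof.
rewrite /mapply (eq_bigr (fun j => 1 * (M i j * u j) + (-1) * ((if i == j then a else 0) * u j))).
  by rewrite Rsum_lin2 Rsum_delta; ring.
by move=> j _; ring.
Qed.

Lemma dot_mapply_sym n (M : mat n) u v : mat_sym M ->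
  dot u (mapply M v) = dot (mapply M u) v.
Proof.
move=> HM; rewrite /dot /mapply.
transitivity (\big[Rplus/0]_(i < n) \big[Rplus/0]_(j < n) (u i * M i j * v j)).
  by apply: eq_bigr => i _; rewrite big_distrr; apply: eq_bigr => j _ /=; ring.
rewrite exchange_big /=; apply: eq_bigr => j _; rewrite big_distrl /=.
by apply: eq_bigr => i _; rewrite HM; ring.
Qed.

Lemma frob2_ge0 n (M : mat n) : 0 <= frob2 M.
Proof. by apply: Rsum_ge0 => i; exact: norm2_ge0. Qed.

Lemma norm2_mapply_le n (M : mat n) u : norm2 (mapply M u) <= frob2 M * norm2 u.
Proof.
rewrite /frob2 big_distrl /=; apply: Rsum_le => i.
by have := cauchy_schwarz2 (M i) u; rewrite /mapply /dot /=; nra.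
Qed.

Lemma quad_form_abs_le n (M : mat n) u :
  Rabs (dot u (mapply M u)) <= sqrt (frob2 M) * norm2 u.
Proof.
have H1 := cauchy_schwarz2 u (mapply M u); have H2 := norm2_mapply_le M u.
have H3 := norm2_ge0 u; have H4 := frob2_ge0 M.
have Hs := sqrt_pos (frob2 M); have Hs2 := sqrt_sqrt _ H4.
apply: Rsqr_incr_0_var; last nra.
rewrite -Rsqr_abs /Rsqr; nra.
Qed.

Lemma mapply_left_inverse n (B : mat n) : mat_sym B ->
  (forall v : 'I_n -> R, (forall i, mapply B v i = 0) -> forall i, v i = 0) ->
  exists C : mat n, forall u i, mapply C (mapply B u) i = u i.
Proof.
move=> HS H.
pose BM := (matrix_of_fun matrix_key (fun i j => B i j) : 'M[R]_n).
have Hdet : determinant BM != 0.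
  apply/negP => /det0P [v vN0 vB0].
  move/negP: vN0; apply; apply/eqP/rowP => i.
  rewrite [RHS]mxE; apply: (H (fun i => v ord0 i)) => j.
  move/matrixP: vB0 => /(_ ord0 j); rewrite !mxE /mapply => E.
  etransitivity; last exact: E.
  by apply: eq_bigr => k _; rewrite /BM mxE HS; exact: Rmult_comm.
have Hu : BM \in unitmx by rewrite unitmxE GRing.unitfE.
exists (fun i j => invmx BM i j) => u i.
have Hent : forall j, mmul (fun i j => invmx BM i j) B i j = if i == j then 1 else 0.
  move=> j; transitivity (mulmx (invmx BM) BM i j).
    by rewrite mxE /mmul; apply: eq_bigr => k _; rewrite mxE.
  by rewrite (mulVmx Hu) mxE; case: (i == j).
rewrite -mapply_mmul /mapply (eq_bigr (fun j => (if i == j then 1 else 0) * u j)).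
  by rewrite Rsum_delta Rmult_1_l.
by move=> j _; rewrite Hent.
Qed.

Lemma psd_cauchy_schwarz n (B : mat n) u v : mat_sym B ->
  (forall w, 0 <= dot w (mapply B w)) ->
  dot u (mapply B v) ^ 2 <= dot u (mapply B u) * dot v (mapply B v).
Proof.
move=> HS Hpsd; apply: quadratic_nonneg_discr; first exact: Hpsd.
move=> s; have := Hpsd (fun j => u j + s * v j).
have -> : mapply B (fun j => u j + s * v j) = (fun j => mapply B u j + s * mapply B v j).
  by apply: functional_extensionality => j; rewrite mapply_lin.
rewrite dot_linl !dot_linr (dot_mapply_sym v u HS) (dotC (mapply B v)); lra.
Qed.

Lemma psd_norm2_mapply_le n (B : mat n) u : mat_sym B ->
  (forall w, 0 <= dot w (mapply B w)) ->
  norm2 (mapply B u) <= sqrt (frob2 B) * dot u (mapply B u).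
Proof.
move=> HS Hpsd.
have H1 := psd_cauchy_schwarz u (mapply B u) HS Hpsd.
rewrite (dot_mapply_sym _ _ HS) -/(norm2 (mapply B u)) in H1.
have H2 := quad_form_abs_le B (mapply B u).
have H3 := Rle_abs (dot (mapply B u) (mapply B (mapply B u))).
have H4 := Hpsd u; have H5 := norm2_ge0 (mapply B u); have H6 := sqrt_pos (frob2 B).
case: (Rle_lt_or_eq_dec 0 _ H5) => HN; last by rewrite -HN; nra.
apply: (Rmult_le_reg_r (norm2 (mapply B u))) => //; nra.
Qed.

Lemma rayleigh_inf n (M : mat n) : (0 < n)%nat -> mat_sym M ->
  exists mu, (forall u, mu * norm2 u <= dot u (mapply M u)) /\
    forall eps, 0 < eps -> exists u, 0 < norm2 u /\ dot u (mapply M u) < (mu + eps) * norm2 u.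
Proof.
move=> Hn HS.
pose q u := dot u (mapply M u).
pose F r := exists u, 0 < norm2 u /\ r = - (q u / norm2 u).
have Fb : bound F.
  exists (sqrt (frob2 M)) => r [u [Hu ->]].
  have H1 := quad_form_abs_le M u; have H2 := Rle_abs (- q u); rewrite Rabs_Ropp in H2.
  apply: (Rmult_le_reg_r (norm2 u)) => //.
  have -> : - (q u / norm2 u) * norm2 u = - q u by field; lra.
  rewrite /q in H2 *; lra.
pose e j := if j == Ordinal Hn then 1 else 0.
have He : 0 < norm2 e.
  have := Rsum_ge_term (F := fun c => e c * e c) (Ordinal Hn) (fun c => ltac:(nra)).
  by rewrite /e eqxx /norm2 /dot; lra.
have [s [Hub Hlub]] := completeness F Fb (ex_intro _ _ (ex_intro _ e (conj He erefl))).
exists (- s); split.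
  move=> u; case: (Rle_lt_or_eq_dec 0 _ (norm2_ge0 u)) => Hu; last first.
    by rewrite -Hu (norm2_eq0 (esym Hu)) dot0l; lra.
  have H1 := Hub _ (ex_intro _ u (conj Hu erefl)).
  have : - s <= q u / norm2 u by lra.
  move/(Rmult_le_compat_r (norm2 u) _ _ (Rlt_le _ _ Hu)).
  by have -> : q u / norm2 u * norm2 u = q u by field; lra.
move=> eps Heps; apply: NNPP => Hne.
suff : s <= s - eps by lra.
apply: Hlub => r [u [Hu ->]].
have : - s + eps <= q u / norm2 u.
  apply: (Rmult_le_reg_r (norm2 u)) => //.
  have -> : q u / norm2 u * norm2 u = q u by field; lra.
  by apply: Rnot_lt_le => Hlt; apply: Hne; exists u.
lra.
Qed.

(* If the Rayleigh quotient of a positive semidefinite [B] gets arbitrarily close to [0],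
   then [B] is singular: otherwise [|u|^2 <= |C|^2 |B u|^2 <= |C|^2 |B| u'Bu] for a left
   inverse [C]. *)
Lemma psd_singular_of_rayleigh_small n (B : mat n) : mat_sym B ->
  (forall w, 0 <= dot w (mapply B w)) ->
  (forall eps, 0 < eps -> exists u, 0 < norm2 u /\ dot u (mapply B u) < eps * norm2 u) ->
  exists v : 'I_n -> R, (exists i, v i <> 0) /\ forall i, mapply B v i = 0.
Proof.
move=> HS Hpsd Hsmall; apply: NNPP => Hns.
have Hinj : forall v, (forall i, mapply B v i = 0) -> forall i, v i = 0.
  by move=> v Hv i; apply: NNPP => Hvi; apply: Hns; exists v; split => //; exists i.
have [C HC] := mapply_left_inverse HS Hinj.
set K := frob2 C * sqrt (frob2 B).
have HK : 0 <= K by apply: Rmult_le_pos; [exact: frob2_ge0 | exact: sqrt_pos].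
have Heps : 0 < / (K + 1) by apply: Rinv_0_lt_compat; lra.
have [u [Hu Hq]] := Hsmall _ Heps.
have E : mapply C (mapply B u) = u by apply: functional_extensionality => i; rewrite HC.
have H1 : norm2 u <= frob2 C * norm2 (mapply B u) by rewrite -{1}E; exact: norm2_mapply_le.
have H2 := psd_norm2_mapply_le u HS Hpsd.
have H3 : norm2 u <= K * dot u (mapply B u).
  apply: Rle_trans H1 _; rewrite /K Rmult_assoc.
  by apply: Rmult_le_compat_l => //; exact: frob2_ge0.
have H4 : K * / (K + 1) < 1.
  apply: (Rmult_lt_reg_r (K + 1)); first lra.
  by rewrite Rmult_assoc Rinv_l; lra.
have := Hpsd u; nra.
Qed.

Lemma rayleigh_min_eigenvalue n (M : mat n) : (0 < n)%nat -> mat_sym M ->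
  exists mu, is_eigenvalue M mu /\ forall u, mu * norm2 u <= dot u (mapply M u).
Proof.
move=> Hn HS.
have [mu [Hlow Happrox]] := rayleigh_inf Hn HS.
pose B i j := M i j - (if i == j then mu else 0).
have HqB : forall u, dot u (mapply B u) = dot u (mapply M u) - mu * norm2 u.
  move=> u; rewrite (_ : mapply B u = fun i => mapply M u i + (- mu) * u i).
    by rewrite dot_linr /norm2; ring.
  by apply: functional_extensionality => i; rewrite /B mapply_shift; ring.
have HSB : mat_sym B by move=> i j; rewrite /B HS eq_sym.
have [v [Hv0 Hv]] : exists v : 'I_n -> R, (exists i, v i <> 0) /\ forall i, mapply B v i = 0.
  apply: psd_singular_of_rayleigh_small => //.
    by move=> w; rewrite HqB; have := Hlow w; lra.
  move=> eps Heps; have [u [Hu Hq]] := Happrox eps Heps.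
  by exists u; split => //; rewrite HqB; lra.
exists mu; split => //; exists v; split => // i.
by have := Hv i; rewrite /B mapply_shift; lra.
Qed.

Lemma mapply_opp n (M : mat n) u i : mapply (fun i j => - M i j) u i = - mapply M u i.
Proof.
rewrite /mapply (eq_bigr (fun j => (-1) * (M i j * u j))); last by move=> j _; ring.
by rewrite -big_distrr /=; ring.
Qed.

Lemma dot_oppr p (u w : vec p) : dot u (fun i => - w i) = - dot u w.
Proof.
rewrite /dot (eq_bigr (fun j => (-1) * (u j * w j))); last by move=> j _; ring.
by rewrite -big_distrr /=; ring.
Qed.

(* [- mu], the top eigenvalue of [M^2] (bottom one of [- M^2]), bounds its quadratic form;
   if [M^2 v = - mu v], then [M v + sqrt (- mu) v], or [v] itself when that vanishes, is an
   eigenvector of [M] for [+- sqrt (- mu)]. *)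
Lemma sym_norm2_mapply_le n (M : mat n) beta : (0 < n)%nat -> mat_sym M -> 0 <= beta ->
  (forall lam, is_eigenvalue M lam -> Rabs lam <= beta) ->
  forall u, norm2 (mapply M u) <= beta ^ 2 * norm2 u.
Proof.
move=> Hn HS Hb Heig.
pose NM i j := - mmul M M i j.
have HNM : forall u i, mapply NM u i = - mapply M (mapply M u) i.
  by move=> u i; rewrite /NM mapply_opp mapply_mmul.
have HNMS : mat_sym NM.
  by move=> i j; rewrite /NM /mmul; congr (- _); apply: eq_bigr => k _; rewrite HS (HS k j); ring.
have [mu [[v0 [[i0 Hv0] Hev]] Hmu]] := rayleigh_min_eigenvalue Hn HNMS.
have Hq : forall u, dot u (mapply NM u) = - norm2 (mapply M u).
  move=> u; rewrite (_ : mapply NM u = fun i => - mapply M (mapply M u) i).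
    by rewrite dot_oppr dot_mapply_sym.
  by apply: functional_extensionality => i; rewrite HNM.
have Hsig : - mu <= beta ^ 2.
  apply: Rnot_lt_le => Hlt.
  have Hs0 : 0 < sqrt (- mu) by apply: sqrt_lt_R0; nra.
  have Hss : sqrt (- mu) * sqrt (- mu) = - mu by rewrite sqrt_sqrt; nra.
  have HMM : forall i, mapply M (mapply M v0) i = - mu * v0 i.
    by move=> i; have := Hev i; rewrite HNM; lra.
  set s := sqrt (- mu) in Hs0 Hss *.
  pose w i := mapply M v0 i + s * v0 i.
  suff : s <= beta by nra.
  case: (classic (exists i, w i <> 0)) => Hw.
  - rewrite -[X in X <= _]Rabs_pos_eq; last lra.
    apply: Heig; exists w; split => // i.
    by rewrite /w mapply_lin HMM -Hss; ring.
  - rewrite -[X in X <= _]Rabs_pos_eq; last lra.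
    rewrite -Rabs_Ropp; apply: Heig; exists v0; split; first by exists i0.
    move=> i; apply: NNPP => Hi; apply: Hw; exists i; rewrite /w; lra.
move=> u; have := Hmu u; rewrite Hq; have := norm2_ge0 u; nra.
Qed.

(** * Mixing matrices *)

Lemma Rsum_mapply n (M : mat n) u :
  \big[Rplus/0]_(i < n) mapply M u i
  = \big[Rplus/0]_(j < n) ((\big[Rplus/0]_(i < n) M i j) * u j).
Proof. by rewrite /mapply exchange_big /=; apply: eq_bigr => j _; rewrite big_distrl. Qed.

Lemma mapply_mpow n (W : mat n) t u : mapply (mpow W t) u = iter t (mapply W) u.
Proof.
elim: t => [|t IH] /=; apply: functional_extensionality => i.
  by rewrite /mapply /mid Rsum_delta; ring.
by rewrite mapply_mmul IH.
Qed.

Lemma mpow_sym n (W : mat n) t : mat_sym W -> mat_sym (mpow W t).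
Proof.
move=> HS i j.
pose e (j : 'I_n) k := if j == k then 1 else 0.
have Hcol : forall P k, mapply P (e k) = fun i => P i k.
  move=> P k; apply: functional_extensionality => l.
  rewrite /mapply (eq_bigr (fun m => (if k == m then 1 else 0) * P l m)).
    by rewrite Rsum_delta; ring.
  by move=> m _; rewrite /e; ring.
have Hdot : forall (k : 'I_n) u, dot (e k) u = u k by move=> k u; rewrite /dot Rsum_delta; ring.
have Hiter : forall u v, dot u (iter t (mapply W) v) = dot (iter t (mapply W) u) v.
  elim: t => [|t IH] u v //.
  by rewrite !iterS dot_mapply_sym // IH -iterSr iterS.
rewrite -[LHS](Hdot i (fun l => mpow W t l j)) -[RHS](Hdot j (fun l => mpow W t l i)).
by rewrite -!Hcol !mapply_mpow Hiter dotC.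
Qed.

Section Mixing.
Variables (n : nat) (W : mat n).
Hypothesis HW : mixing_matrix W.

Lemma mixing_sym : mat_sym W.
Proof. by case: HW. Qed.

Lemma mixing_sum_mapply u : \big[Rplus/0]_(i < n) mapply W u i = \big[Rplus/0]_(i < n) u i.
Proof.
have [_ [_ [_ [Hcol _]]]] := HW.
by rewrite Rsum_mapply; apply: eq_bigr => j _; rewrite Hcol; ring.
Qed.

Lemma mixing_mapply_const m i : mapply W (fun _ => m) i = m.
Proof.
have [_ [_ [Hrow _]]] := HW.
rewrite /mapply (eq_bigr (fun j => m * W i j)); last by move=> j _; ring.
by rewrite -big_distrr /= Hrow; ring.
Qed.

(* Jensen: each [(W v)_i^2] is at most the [W i]-weighted average of the [v_j^2]. *)
Lemma mixing_norm2_mapply_le v : norm2 (mapply W v) <= norm2 v.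
Proof.
have [_ [Hpos [Hrow [Hcol _]]]] := HW.
have Hj : forall i, mapply W v i * mapply W v i
                    <= \big[Rplus/0]_(j < n) (W i j * (v j * v j)).
  move=> i; set m := mapply W v i.
  have H0 : 0 <= \big[Rplus/0]_(j < n) (W i j * ((v j - m) * (v j - m))).
    by apply: Rsum_ge0 => j; apply: Rmult_le_pos; [exact: Hpos | exact: Rle_0_sqr].
  rewrite (eq_bigr (fun j => 1 * (W i j * (v j * v j)) + (- 2 * m) * (W i j * v j)
                             + (m * m) * W i j)) in H0; last by move=> j _; ring.
  by rewrite Rsum_lin3 Hrow -/(mapply W v i) -/m in H0; lra.
apply: Rle_trans (Rsum_le Hj) _.
rewrite exchange_big /=; apply: Req_le; apply: eq_bigr => j _.
by rewrite -big_distrl /= Hcol; ring.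
Qed.

Lemma mixing_mpow_sum t u :
  \big[Rplus/0]_(i < n) mapply (mpow W t) u i = \big[Rplus/0]_(i < n) u i.
Proof. by rewrite mapply_mpow; elim: t => [|t IH] //=; rewrite mixing_sum_mapply. Qed.

Lemma mixing_mpow_const t m i : mapply (mpow W t) (fun _ => m) i = m.
Proof.
rewrite mapply_mpow; suff -> : iter t (mapply W) (fun _ => m) = (fun _ => m) by [].
elim: t => [|t IH] //=; rewrite IH; apply: functional_extensionality => j.
exact: mixing_mapply_const.
Qed.

Lemma mixing_mpow_quad_le t u : dot u (mapply (mpow W t) u) <= norm2 u.
Proof.
rewrite mapply_mpow.
have H : norm2 (iter t (mapply W) u) <= norm2 u.
  elim: t => [|t IH] /=; first lra.
  exact: Rle_trans (mixing_norm2_mapply_le _) IH.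
have := norm2_lin u (iter t (mapply W) u) (-1).
have := norm2_ge0 (fun c => u c + -1 * iter t (mapply W) u c); nra.
Qed.

Variable beta : R.
Hypothesis Hn : (0 < n)%nat.
Hypothesis Hbeta : is_second_eig_mag W beta.
Hypothesis beta_gt0 : 0 < beta.

(* [W - J/n] acts as [W] on mean-zero vectors and kills constants, so its spectrum is that
   of [W] with the simple eigenvalue [1] replaced by [0]. *)
Lemma mixing_contract_mean_zero v : \big[Rplus/0]_(i < n) v i = 0 ->
  norm2 (mapply W v) <= beta ^ 2 * norm2 v.
Proof.
have [HS [_ [_ [Hcol [_ [_ [Hsimple _]]]]]]] := HW.
have HnR : 0 < INR n by apply: lt_0_INR; apply/ltP.
pose K i j := W i j - / INR n.
have HK : forall u i, mapply K u i = mapply W u i - / INR n * \big[Rplus/0]_(j < n) u j.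
  move=> u i; rewrite /mapply /K (eq_bigr (fun j => 1 * (W i j * u j) + (- / INR n) * u j)).
    by rewrite Rsum_lin2; ring.
  by move=> j _; ring.
have HKsum : forall u, \big[Rplus/0]_(i < n) mapply K u i = 0.
  move=> u; rewrite (eq_bigr (fun i => 1 * mapply W u i + (- / INR n) * \big[Rplus/0]_(j < n) u j)).
    by rewrite Rsum_lin2 mixing_sum_mapply Rsum_const; field; lra.
  by move=> i _; rewrite HK; ring.
have HKeig : forall lam, is_eigenvalue K lam -> Rabs lam <= beta.
  move=> lam [u [[i0 Hi0] Hu]].
  case: (Req_dec lam 0) => [->|Hl]; first by rewrite Rabs_R0; lra.
  have Hs : \big[Rplus/0]_(i < n) u i = 0.
    move: (HKsum u); rewrite (eq_bigr (fun i => lam * u i)); last by move=> i _; rewrite Hu.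
    by rewrite -big_distrr /= => /Rmult_integral [].
  have HWu : forall i, mapply W u i = lam * u i by move=> i; rewrite -Hu HK Hs; ring.
  apply: (proj2 Hbeta); first by exists u; split => //; exists i0.
  move=> Hl1; subst lam.
  have [c Hc] := Hsimple u (fun i => ltac:(rewrite HWu; ring)).
  move: Hs; rewrite (eq_bigr (fun _ => c)); last by move=> i _; exact: Hc.
  rewrite Rsum_const => /Rmult_integral [|Hc0]; first lra.
  by apply: Hi0; rewrite Hc.
have HKS : mat_sym K by move=> i j; rewrite /K HS.
move=> Hv.
have -> : mapply W v = mapply K v by apply: functional_extensionality => i; rewrite HK Hv; ring.
by apply: sym_norm2_mapply_le => //; lra.
Qed.

Lemma mixing_mpow_contract_mean_zero t v : \big[Rplus/0]_(i < n) v i = 0 ->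
  norm2 (mapply (mpow W t) v) <= (beta ^ t) ^ 2 * norm2 v.
Proof.
move=> Hv; rewrite mapply_mpow; elim: t => [|t IH] /=; first lra.
have Hz : \big[Rplus/0]_(i < n) iter t (mapply W) v i = 0.
  by elim: (t) => [|t' IH'] //=; rewrite mixing_sum_mapply.
apply: Rle_trans (mixing_contract_mean_zero Hz) _.
have -> : (beta * beta ^ t) ^ 2 * norm2 v = beta ^ 2 * ((beta ^ t) ^ 2 * norm2 v) by ring.
by apply: Rmult_le_compat_l => //; nra.
Qed.

End Mixing.

(** * The DGD iteration *)

Definition column n p (y : 'I_n -> vec p) (c : 'I_p) : 'I_n -> R := fun j => y j c.

Lemma Rsum_dot_columns n p (u v : 'I_n -> vec p) :
  \big[Rplus/0]_(i < n) dot (u i) (v i) = \big[Rplus/0]_(c < p) dot (column u c) (column v c).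
Proof. by rewrite /dot exchange_big. Qed.

Definition consensus_penalty n p (A : mat n) (y : 'I_n -> vec p) :=
  \big[Rplus/0]_(c < p) (norm2 (column y c) - dot (column y c) (mapply A (column y c))).

(* DGD is gradient descent with step [a] on this function. *)
Definition dgd_lyapunov n p (A : mat n) (f : 'I_n -> vec p -> R) a (y : 'I_n -> vec p) :=
  \big[Rplus/0]_(i < n) f i (y i) + / (2 * a) * consensus_penalty A y.

Lemma consensus_penalty_step n (A : mat n) lamn a (v z gr : 'I_n -> R) : mat_sym A ->
  (forall u, lamn * norm2 u <= dot u (mapply A u)) ->
  (forall i, z i = mapply A v i - a * gr i) ->
  norm2 z - dot z (mapply A z)
  <= norm2 v - dot v (mapply A v) - (1 + lamn) * norm2 (vsub z v) - 2 * a * dot (vsub z v) gr.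
Proof.
move=> HS Hlam Hz.
set d := vsub z v.
have Ez : z = (fun j => v j + 1 * d j) by apply: vec_ext => j; rewrite /d /vsub; ring.
have EAz : mapply A (fun j => v j + 1 * d j) = (fun i => mapply A v i + 1 * mapply A d i).
  by apply: vec_ext => i; rewrite mapply_lin.
have EAv : dot d (mapply A v) = dot d v + norm2 d + a * dot d gr.
  rewrite (_ : mapply A v = fun i => v i + 1 * d i + a * gr i); last first.
    by apply: vec_ext => i; rewrite /d /vsub Hz; ring.
  by rewrite /norm2 !dot_linr; ring.
have := Hlam d.
rewrite Ez EAz /norm2 !dot_linl !dot_linr (dot_mapply_sym v d HS) (dotC (mapply A v) d).
rewrite EAv (dotC v d) /norm2; lra.
Qed.

Section DGD.
Variables (n p : nat) (A : mat n) (lamn alpha L : R).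
Variables (f : 'I_n -> vec p -> R) (g : 'I_n -> vec p -> vec p).
Hypothesis A_sym : mat_sym A.
Hypothesis A_quad_ge : forall u, lamn * norm2 u <= dot u (mapply A u).
Hypothesis alpha_gt0 : 0 < alpha.
Hypothesis alpha_L : alpha * L <= 1 + lamn.
Hypothesis f_grad : forall i, is_gradient (f i) (g i).
Hypothesis g_lip : forall i, lipschitz L (g i).

Lemma dgd_lyapunov_step (y z : 'I_n -> vec p) :
  (forall i c, z i c = mapply A (column y c) i - alpha * g i (y i) c) ->
  dgd_lyapunov A f alpha z <= dgd_lyapunov A f alpha y.
Proof.
move=> Hz.
pose d i := vsub (z i) (y i).
pose gr i := g i (y i).
set U := \big[Rplus/0]_(c < p) norm2 (column d c).
set S := \big[Rplus/0]_(c < p) dot (column d c) (column gr c).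
have HU : 0 <= U by apply: Rsum_ge0 => c; exact: norm2_ge0.
have Hf : \big[Rplus/0]_(i < n) f i (z i)
          <= \big[Rplus/0]_(i < n) f i (y i) + S + L / 2 * U.
  rewrite /S /U /norm2 -!(Rsum_dot_columns d) big_distrr /= -!big_split /=.
  by apply: Rsum_le => i; rewrite dotC; exact: smooth_upper_bound.
have Hpen : consensus_penalty A z <= consensus_penalty A y - (1 + lamn) * U - 2 * alpha * S.
  pose pen (w : 'I_n -> vec p) c := norm2 (column w c) - dot (column w c) (mapply A (column w c)).
  have Hstep : forall c, pen z c
      <= 1 * pen y c + (- (1 + lamn)) * norm2 (column d c)
         + (- 2 * alpha) * dot (column d c) (column gr c).
    move=> c; have -> : column d c = vsub (column z c) (column y c) by apply: vec_ext => i.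
    have := consensus_penalty_step (v := column y c) (z := column z c) (gr := column gr c)
              A_sym A_quad_ge (fun i => Hz i c).
    by rewrite /pen; lra.
  rewrite /consensus_penalty; apply: Rle_trans (Rsum_le Hstep) _.
  by rewrite Rsum_lin3 -/U -/S /pen; lra.
have Ha : L / 2 * U <= / (2 * alpha) * ((1 + lamn) * U).
  apply: (Rmult_le_reg_l (2 * alpha)); first lra.
  have -> : 2 * alpha * (/ (2 * alpha) * ((1 + lamn) * U)) = (1 + lamn) * U by field; lra.
  nra.
have Hinv : 0 < / (2 * alpha) by apply: Rinv_0_lt_compat; lra.
have E : / (2 * alpha) * (2 * alpha * S) = S by field; lra.
have := Rmult_le_compat_l _ _ _ (Rlt_le _ _ Hinv) Hpen.
rewrite /dgd_lyapunov; lra.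
Qed.

Hypothesis A_quad_le : forall u, dot u (mapply A u) <= norm2 u.
Variable xs : nat -> 'I_n -> vec p.
Hypothesis xs0 : forall i, xs O i = vzero.
Hypothesis xsS : forall k i c, xs (S k) i c = mapply A (column (xs k) c) i - alpha * g i (xs k i) c.

Lemma dgd_local_sum_le k : \big[Rplus/0]_(i < n) f i (xs k i) <= \big[Rplus/0]_(i < n) f i vzero.
Proof.
have Hly : forall k, dgd_lyapunov A f alpha (xs k) <= dgd_lyapunov A f alpha (xs O).
  elim => [|k' IH]; first lra.
  by apply: Rle_trans IH; apply: dgd_lyapunov_step; exact: xsS.
have Hpen0 : 0 <= consensus_penalty A (xs k).
  by apply: Rsum_ge0 => c; have := A_quad_le (column (xs k) c); lra.
have Epen0 : consensus_penalty A (xs O) = 0.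
  apply: big1 => c _; have -> : column (xs O) c = vzero by apply: vec_ext => i; rewrite /column xs0.
  by rewrite /norm2 !dot0l; ring.
have Ef0 : \big[Rplus/0]_(i < n) f i (xs O i) = \big[Rplus/0]_(i < n) f i vzero.
  by apply: eq_bigr => i _; rewrite xs0.
have Hinv : 0 < / (2 * alpha) by apply: Rinv_0_lt_compat; lra.
have := Hly k; rewrite /dgd_lyapunov Epen0 Ef0; nra.
Qed.

Lemma dgd_gradient_sum_le (fstar : 'I_n -> R) k : 0 < L ->
  (forall i, is_min_value (f i) (fstar i)) ->
  \big[Rplus/0]_(i < n) norm2 (g i (xs k i))
  <= 2 * L * \big[Rplus/0]_(i < n) (f i vzero - fstar i).
Proof.
move=> HL Hmin.
have Hgap i := gradient_norm2_le_gap (xs k i) HL (f_grad i) (g_lip i) (Hmin i).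
apply: Rle_trans (Rsum_le Hgap) _.
rewrite -big_distrr /=; apply: Rmult_le_compat_l; first lra.
by rewrite !Rsum_sub; have := dgd_local_sum_le k; lra.
Qed.
End DGD.

Definition mean n (w : 'I_n -> R) := \big[Rplus/0]_(i < n) w i / INR n.

Section Mean.
Variables (n : nat) (w : 'I_n -> R).
Hypothesis n_gt0 : (0 < n)%nat.

Lemma INR_gt0 : 0 < INR n.
Proof. by apply: lt_0_INR; apply/ltP. Qed.

Lemma Rsum_mean : \big[Rplus/0]_(i < n) w i = INR n * mean w.
Proof. by rewrite /mean; field; have := INR_gt0; lra. Qed.

Lemma Rsum_sub_mean : \big[Rplus/0]_(i < n) (w i - mean w) = 0.
Proof. by rewrite Rsum_sub Rsum_const Rsum_mean; ring. Qed.

Lemma norm2_sub_mean_le : norm2 (fun i => w i - mean w) <= norm2 w.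
Proof.
have -> : (fun i => w i - mean w) = (fun i => w i + (-1) * (fun _ => mean w) i).
  by apply: vec_ext => i; ring.
rewrite norm2_lin.
have -> : dot w (fun _ => mean w) = INR n * mean w * mean w.
  by rewrite /dot -big_distrl /= -Rsum_mean.
rewrite /norm2 /dot Rsum_const; have := INR_gt0; nra.
Qed.
End Mean.

Lemma stacked_norm_triangle n p (a b : 'I_p -> 'I_n -> R) s :
  sqrt (\big[Rplus/0]_(c < p) norm2 (fun i => a c i + s * b c i))
  <= sqrt (\big[Rplus/0]_(c < p) norm2 (a c)) + Rabs s * sqrt (\big[Rplus/0]_(c < p) norm2 (b c)).
Proof.
set X := \big[Rplus/0]_(c < p) norm2 (a c).
set Y := \big[Rplus/0]_(c < p) norm2 (b c).
set Z := \big[Rplus/0]_(c < p) dot (a c) (b c).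
have Hexp : forall r, \big[Rplus/0]_(c < p) norm2 (fun i => a c i + r * b c i)
                      = X + 2 * Z * r + Y * r ^ 2.
  move=> r; rewrite (eq_bigr (fun c => 1 * norm2 (a c) + (2 * r) * dot (a c) (b c)
                                     + (r ^ 2) * norm2 (b c))).
    by rewrite Rsum_lin3 /X /Y /Z; ring.
  by move=> c _; rewrite norm2_lin; ring.
have HX : 0 <= X by apply: Rsum_ge0 => c; exact: norm2_ge0.
have HY : 0 <= Y by apply: Rsum_ge0 => c; exact: norm2_ge0.
have HZ : Z ^ 2 <= X * Y.
  by apply: quadratic_nonneg_discr => // r; rewrite -Hexp; apply: Rsum_ge0 => c; exact: norm2_ge0.
have HsX := sqrt_sqrt X HX; have HsY := sqrt_sqrt Y HY.
have Hsx0 := sqrt_pos X; have Hsy0 := sqrt_pos Y; have Hs := Rabs_pos s.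
have HaZ : Rabs Z <= sqrt X * sqrt Y.
  rewrite -sqrt_mult // -sqrt_Rsqr_abs; apply: sqrt_le_1_alt; rewrite /Rsqr; nra.
have H1 : 2 * Z * s <= 2 * Rabs s * (sqrt X * sqrt Y).
  by have := Rle_abs (Z * s); rewrite Rabs_mult; nra.
have Hsq : X + 2 * Z * s + Y * s ^ 2 <= (sqrt X + Rabs s * sqrt Y) ^ 2.
  by have := pow2_abs s; nra.
rewrite Hexp; apply: Rle_trans (sqrt_le_1_alt _ _ Hsq) _.
by rewrite sqrt_pow2; nra.
Qed.

Lemma linear_recurrence_le (u : nat -> R) r b : 0 <= r < 1 -> 0 <= b ->
  (forall k, u (S k) <= r * u k + b) -> forall k, u k <= r ^ k * u O + b / (1 - r).
Proof.
move=> Hr Hb H; elim => [|k IH] /=.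
  have : 0 <= b / (1 - r).
    by apply: Rmult_le_pos; [lra | apply: Rlt_le; apply: Rinv_0_lt_compat; lra].
  lra.
apply: Rle_trans (H k) _.
have : r * u k <= r * (r ^ k * u O + b / (1 - r)) by apply: Rmult_le_compat_l; lra.
have : r * (b / (1 - r)) + b = b / (1 - r) by field; lra.
nra.
Qed.

Definition consensus_error n p (y : 'I_n -> vec p) :=
  \big[Rplus/0]_(c < p) norm2 (fun i => y i c - xbar y c).

Lemma sqrt_le_of_sq_le a b : 0 <= b -> a <= b ^ 2 -> sqrt a <= b.
Proof.
by move=> Hb H; apply: Rle_trans (sqrt_le_1_alt _ _ H) _; rewrite sqrt_pow2 //; exact: Rle_refl.
Qed.

Section Consensus.
Variables (n p : nat) (A : mat n) (alpha bt D : R).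
Variables (g : 'I_n -> vec p -> vec p) (xs : nat -> 'I_n -> vec p).
Hypothesis n_gt0 : (0 < n)%nat.
Hypothesis A_sum : forall u, \big[Rplus/0]_(i < n) mapply A u i = \big[Rplus/0]_(i < n) u i.
Hypothesis A_const : forall m i, mapply A (fun _ => m) i = m.
Hypothesis A_contract : forall v, \big[Rplus/0]_(i < n) v i = 0 ->
  norm2 (mapply A v) <= bt ^ 2 * norm2 v.
Hypothesis bt_range : 0 <= bt < 1.
Hypothesis alpha_gt0 : 0 < alpha.
Hypothesis D_ge0 : 0 <= D.
Hypothesis grad_sum_le : forall k, \big[Rplus/0]_(i < n) norm2 (g i (xs k i)) <= D ^ 2.
Hypothesis xs0 : forall i, xs O i = vzero.
Hypothesis xsS : forall k i c, xs (S k) i c = mapply A (column (xs k) c) i - alpha * g i (xs k i) c.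

Lemma dgd_xbar_step k c :
  xbar (xs (S k)) c = xbar (xs k) c - alpha * mean (fun i => g i (xs k i) c).
Proof.
have := INR_gt0 n_gt0; rewrite /xbar /mean => Hn.
rewrite (eq_bigr (fun i => 1 * mapply A (column (xs k) c) i + (- alpha) * g i (xs k i) c)).
  by rewrite Rsum_lin2 A_sum /column; field; lra.
by move=> i _; rewrite xsS; ring.
Qed.

Lemma dgd_consensus_error_step k :
  sqrt (consensus_error (xs (S k))) <= bt * sqrt (consensus_error (xs k)) + alpha * D.
Proof.
pose dev c i := xs k i c - xbar (xs k) c.
pose gr c i := g i (xs k i) c.
pose gdev c i := gr c i - mean (gr c).
have Edev : forall c, (fun i => xs (S k) i c - xbar (xs (S k)) c)
                      = (fun i => mapply A (dev c) i + (- alpha) * gdev c i).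
  move=> c; apply: vec_ext => i.
  rewrite dgd_xbar_step xsS /gdev /gr.
  rewrite (_ : dev c = fun j => column (xs k) c j + (-1) * (fun _ => xbar (xs k) c) j).
    by rewrite mapply_lin A_const; ring.
  by apply: vec_ext => j; rewrite /dev /column; ring.
have HE := stacked_norm_triangle (fun c => mapply A (dev c)) gdev (- alpha).
rewrite -(eq_bigr _ (fun c _ => f_equal norm2 (Edev c))) -/(consensus_error _) in HE.
apply: Rle_trans HE _; rewrite Rabs_Ropp Rabs_pos_eq; last lra.
apply: Rplus_le_compat.
  have HE := Rsum_ge0 (fun c => norm2_ge0 (fun i => xs k i c - xbar (xs k) c)).
  apply: sqrt_le_of_sq_le; first by apply: Rmult_le_pos; [lra | exact: sqrt_pos].
  rewrite Rpow_mult_distr pow2_sqrt // /consensus_error big_distrr /=.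
  by apply: Rsum_le => c; apply: A_contract; exact: Rsum_sub_mean.
apply: Rmult_le_compat_l; first lra.
apply: sqrt_le_of_sq_le => //; apply: Rle_trans (grad_sum_le k).
rewrite /gdev; apply: Rle_trans (Rsum_le (fun c => norm2_sub_mean_le (gr c) n_gt0)) _.
by rewrite /norm2 -Rsum_dot_columns; exact: Rle_refl.
Qed.

Lemma dgd_consensus_error_le k : consensus_error (xs k) <= (alpha * D / (1 - bt)) ^ 2.
Proof.
have Hb : 0 <= alpha * D by apply: Rmult_le_pos; lra.
have := linear_recurrence_le (u := fun k => sqrt (consensus_error (xs k))) bt_range Hb
          dgd_consensus_error_step k.
have -> : consensus_error (xs O) = 0.
  apply: big1 => c _; rewrite /xbar (eq_bigr (fun _ => 0)); last by move=> i _; rewrite xs0.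
  by rewrite (_ : (fun i => xs O i c - _) = vzero) /norm2 ?dot0l //; apply: vec_ext => i;
     rewrite xs0 /vzero Rsum_const; field; have := INR_gt0 n_gt0; lra.
rewrite sqrt_0 Rmult_0_r Rplus_0_l => H.
have HE : 0 <= consensus_error (xs k) by apply: Rsum_ge0 => c; exact: norm2_ge0.
rewrite -(sqrt_sqrt _ HE) -Rsqr_pow2; apply: Rsqr_incr_1 => //; first exact: sqrt_pos.
by apply: Rmult_le_pos => //; apply: Rlt_le; apply: Rinv_0_lt_compat; lra.
Qed.
End Consensus.

(** * The averaged objective *)

Lemma derivable_pt_lim_Rsum (I : Type) (r : seq I) (F : I -> R -> R) (d : I -> R) s :
  (forall i, derivable_pt_lim (F i) s (d i)) ->
  derivable_pt_lim (fun z => \big[Rplus/0]_(i <- r) F i z) s (\big[Rplus/0]_(i <- r) d i).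
Proof.
move=> H; elim: r => [|a r IH].
  rewrite big_nil; apply: (derivable_pt_lim_ext (fct_cte 0)); last exact: derivable_pt_lim_const.
  by move=> z; rewrite big_nil.
rewrite big_cons; apply: (derivable_pt_lim_ext (F a + (fun z => \big[Rplus/0]_(i <- r) F i z))%F).
  by move=> z; rewrite big_cons.
exact: derivable_pt_lim_plus.
Qed.

Definition avg_obj n p (f : 'I_n -> vec p -> R) (x : vec p) := / INR n * sumR (fun i => f i x).
Definition avg_grad n p (g : 'I_n -> vec p -> vec p) (x : vec p) : vec p :=
  fun c => / INR n * \big[Rplus/0]_(i < n) g i x c.

Section Average.
Variables (n p : nat) (f : 'I_n -> vec p -> R) (g : 'I_n -> vec p -> vec p).
Hypothesis n_gt0 : (0 < n)%nat.
Hypothesis f_grad : forall i, is_gradient (f i) (g i).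

Lemma dot_avg_grad x d : dot (avg_grad g x) d = / INR n * \big[Rplus/0]_(i < n) dot (g i x) d.
Proof.
rewrite /dot /avg_grad big_distrr /=.
transitivity (\big[Rplus/0]_(c < p) \big[Rplus/0]_(i < n) (/ INR n * (g i x c * d c))).
  by apply: eq_bigr => c _; rewrite big_distrr big_distrl /=; apply: eq_bigr => i _; ring.
by rewrite exchange_big /=; apply: eq_bigr => i _; rewrite big_distrr.
Qed.

Lemma avg_obj_strongly_convex muh x y :
  strongly_convex muh (fun x => sumR (fun i => f i x)) ->
  avg_obj f x + dot (avg_grad g x) (vsub y x) + muh / INR n / 2 * norm2 (vsub y x)
  <= avg_obj f y.
Proof.
move=> Hsc; have Hk := Rinv_0_lt_compat _ (INR_gt0 n_gt0).
have Hd : derivable_pt_lim (fun s => sumR (fun i => f i (vadd x (vscale s (vsub y x))))) 0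
            (\big[Rplus/0]_(i < n) dot (g i x) (vsub y x)).
  apply: derivable_pt_lim_Rsum => i.
  by have := gradient_line_deriv x (vsub y x) 0 (f_grad i); rewrite line0.
have := Rmult_le_compat_l _ _ _ (Rlt_le _ _ Hk) (strongly_convex_first_order Hsc Hd).
by rewrite /avg_obj dot_avg_grad /Rdiv; lra.
Qed.

Lemma avg_obj_smooth (Lf : 'I_n -> R) x y :
  (forall i, lipschitz (Lf i) (g i)) ->
  avg_obj f y <= avg_obj f x + dot (avg_grad g x) (vsub y x)
                 + sumR Lf / INR n / 2 * norm2 (vsub y x).
Proof.
move=> HLip; have Hk := Rinv_0_lt_compat _ (INR_gt0 n_gt0).
have H : sumR (fun i => f i y) <= sumR (fun i => f i x)
           + \big[Rplus/0]_(i < n) dot (g i x) (vsub y x) + sumR Lf / 2 * norm2 (vsub y x).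
  rewrite /sumR /Rdiv !big_distrl /= -!big_split /=; apply: Rsum_le => i.
  exact: smooth_upper_bound.
have := Rmult_le_compat_l _ _ _ (Rlt_le _ _ Hk) H.
by rewrite /avg_obj dot_avg_grad /Rdiv; lra.
Qed.

Lemma Rsum_sq_le (w : 'I_n -> R) :
  (\big[Rplus/0]_(i < n) w i) ^ 2 <= INR n * \big[Rplus/0]_(i < n) (w i * w i).
Proof.
have := cauchy_schwarz2 (fun _ : 'I_n => 1) w.
have -> : dot (fun _ : 'I_n => 1) w = \big[Rplus/0]_(i < n) w i by apply: eq_bigr => i _; ring.
have -> : norm2 (fun _ : 'I_n => 1) = INR n by rewrite /norm2 /dot Rsum_const; ring.
done.
Qed.

Lemma norm2_avg_grad_sub_le L (y : vec p) (z : 'I_n -> vec p) :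
  (forall i, lipschitz L (g i)) ->
  norm2 (vsub (avg_grad g y) (fun c => / INR n * \big[Rplus/0]_(i < n) g i (z i) c))
  <= L ^ 2 * \big[Rplus/0]_(i < n) norm2 (vsub y (z i)).
Proof.
move=> HLip; have Hn := INR_gt0 n_gt0; have Hn1 : 1 <= INR n by apply: (le_INR 1); apply/leP.
pose w i := vsub (g i y) (g i (z i)).
set V := vsub _ _.
have H1 : norm2 V <= / INR n * \big[Rplus/0]_(i < n) norm2 (w i).
  rewrite {1}/norm2 {1}/dot /norm2 (Rsum_dot_columns w w) big_distrr /=; apply: Rsum_le => c.
  have -> : V c = / INR n * \big[Rplus/0]_(i < n) column w c i.
    by rewrite /V /vsub /avg_grad -Rmult_minus_distr_l -Rsum_sub.
  have := Rsum_sq_le (column w c); rewrite /dot.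
  set S := \big[Rplus/0]_(i < n) column w c i; set Q := \big[Rplus/0]_(i < n) _.
  move=> HSQ; have E : / INR n * S * (/ INR n * S) = / INR n * (/ INR n * S ^ 2) by ring.
  rewrite E; apply: Rmult_le_compat_l; first by apply: Rlt_le; apply: Rinv_0_lt_compat.
  apply: (Rmult_le_reg_l (INR n)) => //.
  by rewrite -Rmult_assoc Rinv_r ?Rmult_1_l; lra.
have H2 : \big[Rplus/0]_(i < n) norm2 (w i) <= L ^ 2 * \big[Rplus/0]_(i < n) norm2 (vsub y (z i)).
  rewrite big_distrr /=; apply: Rsum_le => i.
  have := HLip i y (z i); have := norm_ge0 (w i); have := norm_ge0 (vsub y (z i)).
  by rewrite -!norm_sq -/(w i); nra.
have H0 : 0 <= \big[Rplus/0]_(i < n) norm2 (w i) by apply: Rsum_ge0 => i; exact: norm2_ge0.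
have Hinv : / INR n <= 1 by rewrite -Rinv_1; apply: Rinv_le_contravar; lra.
nra.
Qed.
End Average.

Lemma consensus_error_sum n p (y : 'I_n -> vec p) :
  consensus_error y = \big[Rplus/0]_(i < n) norm2 (vsub (xbar y) (y i)).
Proof.
rewrite /norm2 Rsum_dot_columns; apply: eq_bigr => c _.
by apply: eq_bigr => i _; rewrite /column /vsub; ring.
Qed.

Section MeanStep.
Variables (n p : nat) (A : mat n) (alpha L r B : R).
Variables (g : 'I_n -> vec p -> vec p) (xs : nat -> 'I_n -> vec p) (xstar : vec p).
Hypothesis n_gt0 : (0 < n)%nat.
Hypothesis A_sum : forall u, \big[Rplus/0]_(i < n) mapply A u i = \big[Rplus/0]_(i < n) u i.
Hypothesis xsS : forall k i c, xs (S k) i c = mapply A (column (xs k) c) i - alpha * g i (xs k i) c.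
Hypothesis g_lip : forall i, lipschitz L (g i).
Hypothesis avg_step_contract : forall x,
  norm2 (vsub (vsub x (vscale alpha (avg_grad g x))) xstar) <= r * norm2 (vsub x xstar).
Hypothesis consensus_le : forall k, consensus_error (xs k) <= B ^ 2.

(* The mean takes an exact gradient step on the averaged objective, perturbed by the gap
   between the averaged gradient at the mean and at the local iterates; Young's inequality
   splits the two with weight [alpha delta]. *)
Lemma dgd_mean_step_le delta k : 0 < alpha -> 0 < delta ->
  norm2 (vsub (xbar (xs (S k))) xstar)
  <= (1 + alpha * delta) * r * norm2 (vsub (xbar (xs k)) xstar)
     + (1 + / (alpha * delta)) * (alpha ^ 2 * L ^ 2 * B ^ 2).
Proof.
move=> Ha Hd.
set xb := xbar (xs k).
pose loc c := / INR n * \big[Rplus/0]_(i < n) g i (xs k i) c.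
pose e := vscale alpha (vsub (avg_grad g xb) loc).
have -> : vsub (xbar (xs (S k))) xstar
          = (fun c => vsub (vsub xb (vscale alpha (avg_grad g xb))) xstar c + 1 * e c).
  apply: vec_ext => c; rewrite /vsub (dgd_xbar_step n_gt0 A_sum xsS) /e /loc /mean /vscale /vsub.
  by rewrite /Rdiv (Rmult_comm _ (/ INR n)) -/xb; ring.
apply: Rle_trans (young_norm2 _ _ (Rmult_lt_0_compat _ _ Ha Hd)) _.
apply: Rplus_le_compat.
  by rewrite Rmult_assoc; apply: Rmult_le_compat_l; [nra | exact: avg_step_contract].
apply: Rmult_le_compat_l; first by have := Rinv_0_lt_compat _ (Rmult_lt_0_compat _ _ Ha Hd); lra.
rewrite /e norm2_scale Rmult_assoc; apply: Rmult_le_compat_l; first nra.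
apply: Rle_trans (norm2_avg_grad_sub_le n_gt0 xb (xs k) g_lip) _.
by apply: Rmult_le_compat_l; [nra | rewrite -consensus_error_sum].
Qed.
End MeanStep.

Lemma sqrt_linear_recurrence_le (N : nat -> R) c1 c3 b : 0 < c1 < 1 -> 0 <= c3 -> 0 < b ->
  (forall k, 0 <= N k) -> (forall k, N (S k) <= c1 ^ 2 * N k + c3 ^ 2 / b ^ 2) ->
  forall k, sqrt (N k) <= c1 ^ k * sqrt (N O) + c3 / (sqrt (1 - c1 ^ 2) * b).
Proof.
move=> Hc1 Hc3 Hb HN H k.
have Hr : 0 <= c1 ^ 2 < 1 by split; nra.
have Hq : 0 <= c3 ^ 2 / b ^ 2.
  by apply: Rmult_le_pos; [nra | apply: Rlt_le; apply: Rinv_0_lt_compat; nra].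
have Hk := linear_recurrence_le Hr Hq H k.
have Hs : 0 < sqrt (1 - c1 ^ 2) by apply: sqrt_lt_R0; lra.
have Hs2 : sqrt (1 - c1 ^ 2) ^ 2 = 1 - c1 ^ 2 by rewrite pow2_sqrt; lra.
have Hc1k : 0 <= c1 ^ k by apply: pow_le; lra.
have E1 : (c1 ^ 2) ^ k * N O = (c1 ^ k * sqrt (N O)) ^ 2.
  by rewrite Rpow_mult_distr pow2_sqrt // -!pow_mult Nat.mul_comm.
have E2 : c3 ^ 2 / b ^ 2 / (1 - c1 ^ 2) = (c3 / (sqrt (1 - c1 ^ 2) * b)) ^ 2.
  by move: Hs Hs2; set s := sqrt _ => Hs <-; field; split; lra.
rewrite E1 E2 in Hk.
apply: Rle_trans (sqrt_le_1_alt _ _ Hk) _.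
have Hc10 : 0 <= c1 ^ k * sqrt (N O) by apply: Rmult_le_pos => //; exact: sqrt_pos.
have Hc30 : 0 <= c3 / (sqrt (1 - c1 ^ 2) * b).
  by apply: Rmult_le_pos => //; apply: Rlt_le; apply: Rinv_0_lt_compat; nra.
apply: sqrt_le_of_sq_le; first lra.
nra.
Qed.

(** * Step size and rate *)

Lemma le_maxR n (F : 'I_n -> R) i : F i <= maxR F.
Proof.
rewrite /maxR; have : i \in index_enum 'I_n by rewrite mem_index_enum.
elim: (index_enum 'I_n) => [|a r IH] //= Hi.
rewrite big_cons; rewrite in_cons in Hi.
case/orP: Hi => [/eqP <-|Hi]; first exact: Rmax_l.
exact: Rle_trans (IH Hi) (Rmax_r _ _).
Qed.

Lemma maxR_le n (F : 'I_n -> R) B : 0 <= B -> (forall i, F i <= B) -> maxR F <= B.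
Proof. by move=> HB H; apply: (big_ind (fun m => m <= B)) => // a b; exact: Rmax_lub. Qed.

(* In Rocq [b / 0 = 0], so a positive step below [b / L] forces [L > 0]. *)
Lemma step_size_bound a b L : 0 < a -> 0 <= L -> a <= b / L -> 0 < L /\ a * L <= b.
Proof.
move=> Ha HL Hab; case: (Rle_lt_or_eq_dec 0 L HL) => [HL'|HL0].
  split => //; have := Rmult_le_compat_r L _ _ HL Hab.
  by have -> : b / L * L = b by field; lra.
by subst L; rewrite /Rdiv Rinv_0 Rmult_0_r in Hab; lra.
Qed.

Lemma maxR_le_sumR n (F : 'I_n -> R) : (forall i, 0 <= F i) -> maxR F <= sumR F.
Proof. by move=> H; apply: maxR_le; [exact: Rsum_ge0 | move=> i; exact: Rsum_ge_term]. Qed.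

Lemma lipschitz_maxR n p (g : 'I_n -> vec p -> vec p) (Lf : 'I_n -> R) :
  (forall i, lipschitz (Lf i) (g i)) -> forall i, lipschitz (maxR Lf) (g i).
Proof.
move=> HLip i u v; apply: Rle_trans (HLip i u v) _.
by apply: Rmult_le_compat_r; [exact: norm_ge0 | exact: le_maxR].
Qed.

Lemma sqrt_in_01 a : 0 < a < 1 -> 0 < sqrt a < 1.
Proof. by move=> Ha; split; [apply: sqrt_lt_R0 | rewrite -sqrt_1; apply: sqrt_lt_1_alt]; lra. Qed.

(* This [delta] spends half of the contraction [a c] on the consensus error. *)
Lemma tuned_delta a c : 0 < a -> 0 < c -> a * c < 1 ->
  let delta := c / (2 * (1 - a * c)) in
  0 < delta /\ 1 - a * c + a * delta - a ^ 2 * delta * c = 1 - a * c / 2.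
Proof.
move=> Ha Hc Hac delta; have Hac0 : 0 < a * c by nra.
by split; [apply: Rdiv_lt_0_compat | rewrite /delta; field]; lra.
Qed.

Lemma mixing_mpow_quad_ge n (W : mat n) t lamn : (0 < n)%nat -> mixing_matrix W ->
  is_min_eigenvalue (mpow W t) lamn ->
  forall u, lamn * norm2 u <= dot u (mapply (mpow W t) u).
Proof.
move=> Hn HW [_ Hmin] u.
have [mu [Hmu Hq]] := rayleigh_min_eigenvalue Hn (mpow_sym t (mixing_sym HW)).
apply: Rle_trans (Hq u); apply: Rmult_le_compat_r; [exact: norm2_ge0 | exact: Hmin].
Qed.

Lemma dgd_consensus_error_bound n p t (W : mat n) beta lamn
    (f : 'I_n -> vec p -> R) g (fstar : 'I_n -> R) L alpha :
  (0 < n)%nat -> (0 < t)%nat -> mixing_matrix W -> is_second_eig_mag W beta -> 0 < beta < 1 ->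
  is_min_eigenvalue (mpow W t) lamn ->
  (forall i, is_gradient (f i) (g i)) -> (forall i, lipschitz L (g i)) ->
  (forall i, is_min_value (f i) (fstar i)) ->
  0 < L -> 0 < alpha -> alpha * L <= 1 + lamn ->
  forall k, consensus_error (dgd W t alpha g k)
    <= (alpha * sqrt (2 * L * sumR (fun i => f i vzero - fstar i)) / (1 - beta ^ t)) ^ 2.
Proof.
move=> Hn Ht HW Hbeta Hb01 Hlamn Hgrad HLip Hmin HL Ha HaL.
have Hgap : 0 <= 2 * L * sumR (fun i => f i vzero - fstar i).
  apply: Rmult_le_pos; first lra; apply: Rsum_ge0 => i.
  by have := proj2 (Hmin i) vzero; lra.
apply: (dgd_consensus_error_le (A := mpow W t) (g := g)) => //.
- exact: mixing_mpow_sum.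
- exact: mixing_mpow_const.
- by move=> v; apply: mixing_mpow_contract_mean_zero => //; lra.
- by apply: pow_lt_1_compat; [lra | apply/ltP].
- exact: sqrt_pos.
- move=> k; rewrite pow2_sqrt //.
  apply: (dgd_gradient_sum_le (A := mpow W t) (lamn := lamn)) => //.
  all: first [ assumption | exact: mpow_sym (mixing_sym HW)
             | exact: mixing_mpow_quad_ge | exact: mixing_mpow_quad_le ].
Qed.

Lemma avg_gradient_step_contraction n p (f : 'I_n -> vec p -> R) g (Lf : 'I_n -> R) muh xstar
    alpha : (0 < n)%nat ->
  (forall i, is_gradient (f i) (g i)) -> (forall i, lipschitz (Lf i) (g i)) ->
  0 < muh -> strongly_convex muh (fun x => sumR (fun i => f i x)) ->
  is_minimizer (fun x => sumR (fun i => f i x)) xstar -> 0 < sumR Lf ->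
  0 < alpha -> alpha <= 2 / (muh / INR n + sumR Lf / INR n) ->
  forall x, norm2 (vsub (vsub x (vscale alpha (avg_grad g x))) xstar)
    <= (1 - alpha * (2 * (muh / INR n) * (sumR Lf / INR n) / (muh / INR n + sumR Lf / INR n)))
       * norm2 (vsub x xstar).
Proof.
move=> Hn Hgrad HLip Hmuh Hsc Hxstar HLf Ha Hac x.
have Hk := Rinv_0_lt_compat _ (INR_gt0 Hn).
have Hsm := fun x y => avg_obj_smooth Hn Hgrad x y HLip.
apply: (gradient_step_contraction (phi := avg_obj f)) => //.
- by apply: Rdiv_lt_0_compat => //; exact: INR_gt0.
- by move=> u v; exact: avg_obj_strongly_convex.
- apply: (minimizer_gradient_zero (phi := avg_obj f)) Hsm _.
    by apply: Rdiv_lt_0_compat => //; exact: INR_gt0.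
  by move=> y; apply: Rmult_le_compat_l; [lra | exact: Hxstar].
Qed.

Theorem theorem1
  (n p t : nat) (Hn : (0 < n)%nat) (Ht : (1 <= t)%nat)
  (W : mat n) (HW : mixing_matrix W)
  (beta : R) (Hbeta : is_second_eig_mag W beta) (Hbeta01 : 0 < beta < 1)
  (lamn : R) (Hlamn : is_min_eigenvalue (mpow W t) lamn)
  (f : 'I_n -> vec p -> R) (g : 'I_n -> vec p -> vec p)
  (Lf : 'I_n -> R) (fstar : 'I_n -> R)
  (Hgrad : forall i, is_gradient (f i) (g i))
  (Hconv : forall i, convex_fun (f i))
  (HL0 : forall i, 0 <= Lf i)
  (HLip : forall i, lipschitz (Lf i) (g i))
  (Hmin : forall i, is_min_value (f i) (fstar i))
  (muh : R) (Hmuh : 0 < muh)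
  (Hsc : strongly_convex muh (fun x => sumR (fun i => f i x)))
  (xstar : vec p) (Hxstar : is_minimizer (fun x => sumR (fun i => f i x)) xstar)
  (alpha : R) :
  let L := maxR Lf in
  let mu_f := muh / INR n in
  let L_f := sumR Lf / INR n in
  let c2 := 2 * mu_f * L_f / (mu_f + L_f) in
  let c4 := 2 / (mu_f + L_f) in
  let D := sqrt (2 * L * sumR (fun i => f i vzero - fstar i)) in
  let x := dgd W t alpha g in
  let c1sq := fun delta => 1 - alpha * c2 + alpha * delta - alpha ^ 2 * delta * c2 in
  let c3sq := fun delta => alpha ^ 3 * (alpha + / delta) * L ^ 2 * D ^ 2 in
  0 < alpha -> alpha <= Rmin ((1 + lamn) / L) c4 ->
  (forall delta, 0 < delta -> forall k : nat,
     norm2 (vsub (xbar (x (S k))) xstar)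
       <= c1sq delta * norm2 (vsub (xbar (x k)) xstar)
          + c3sq delta / (1 - beta ^ t) ^ 2) /\
  (alpha * c2 < 1 ->
     let delta := c2 / (2 * (1 - alpha * c2)) in
     let c1 := sqrt (1 - alpha * c2 / 2) in
     let c3 := sqrt (c3sq delta) in
     c1sq delta = 1 - alpha * c2 / 2 /\ 0 < c1 < 1 /\
     forall k : nat,
       norm (vsub (xbar (x k)) xstar)
         <= c1 ^ k * norm (vsub (xbar (x O)) xstar)
            + c3 / (sqrt (1 - c1 ^ 2) * (1 - beta ^ t))).

Proof.
move=> L mu_f L_f c2 c4 D x c1sq c3sq Ha Hale.
have HLnn : 0 <= L := Rle_trans _ _ _ (HL0 (Ordinal Hn)) (le_maxR _ _).
have [HL HaL] := step_size_bound Ha HLnn (Rle_trans _ _ _ Hale (Rmin_l _ _)).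
have HLf : 0 < sumR Lf := Rlt_le_trans _ _ _ HL (maxR_le_sumR HL0).
have Hc2 : 0 < c2.
  have Hmuf : 0 < mu_f := Rdiv_lt_0_compat _ _ Hmuh (INR_gt0 Hn).
  have HLf' : 0 < L_f := Rdiv_lt_0_compat _ _ HLf (INR_gt0 Hn).
  by apply: Rdiv_lt_0_compat; nra.
have Hbt : 0 < 1 - beta ^ t by have := pow_lt_1_compat beta t ltac:(lra) ltac:(exact/ltP); lra.
have Hstep := dgd_mean_step_le (B := alpha * D / (1 - beta ^ t)) Hn (mixing_mpow_sum HW t)
  (fun k i c => erefl) (lipschitz_maxR HLip) (avg_gradient_step_contraction Hn Hgrad HLip Hmuh
     Hsc Hxstar HLf Ha (Rle_trans _ _ _ Hale (Rmin_r _ _)))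
  (dgd_consensus_error_bound Hn Ht HW Hbeta Hbeta01 Hlamn Hgrad (lipschitz_maxR HLip) Hmin HL Ha
     HaL).
have Part1 : forall delta, 0 < delta -> forall k : nat,
    norm2 (vsub (xbar (x (S k))) xstar)
    <= c1sq delta * norm2 (vsub (xbar (x k)) xstar) + c3sq delta / (1 - beta ^ t) ^ 2.
  move=> delta Hd k; have := Hstep delta k Ha Hd.
  have -> : (1 + alpha * delta) * (1 - alpha * c2) = c1sq delta by rewrite /c1sq; ring.
  by have -> : (1 + / (alpha * delta)) * (alpha ^ 2 * L ^ 2 * (alpha * D / (1 - beta ^ t)) ^ 2)
            = c3sq delta / (1 - beta ^ t) ^ 2 by rewrite /c3sq; field; lra.
split => // Hac2 delta c1 c3.
have [Hd Ec1] : 0 < delta /\ c1sq delta = 1 - alpha * c2 / 2 := tuned_delta Ha Hc2 Hac2.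
have Hc1 : 0 < c1 < 1 by apply: sqrt_in_01; nra.
have Hc1sq : c1 ^ 2 = c1sq delta by rewrite Ec1 /c1 pow2_sqrt; nra.
have Hc3 : c3 ^ 2 = c3sq delta.
  rewrite /c3 pow2_sqrt // /c3sq.
  by have := Rinv_0_lt_compat _ Hd; have := pow2_ge_0 L; have := pow2_ge_0 D; nra.
do 2!split => //; apply: sqrt_linear_recurrence_le => // [|k|k]; first exact: sqrt_pos.
  exact: norm2_ge0.
by rewrite Hc1sq Hc3; exact: Part1.
Qed.
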